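(* Let $f, g \in \mathrm{Inj}(\Omega)$ each have exactly one infinite cycle, and satisfy $(f)\mathrm{C}_n, (g)\mathrm{C}_n < \aleph_0$ for all $n \in \mathbb{Z}_+$. Then $f \approx_{\mathrm{even}} g$ if and only if $f = hh_1gh_2h^{-1}$ for some $h \in \mathrm{Sym}(\Omega)$ and $h_1, h_2 \in \mathrm{Alt}(\Omega)$.
   Context: $\Omega$ is a countably infinite set; maps are written on the right and composed left to right. $\mathrm{Inj}(\Omega)$ is the monoid of injective maps $\Omega\to\Omega$, $\mathrm{Sym}(\Omega)$ the permutation group, $\mathrm{Alt}(\Omega)$ the group of even permutations moving only finitely many points. For $f\in\mathrm{Inj}(\Omega)$, a cycle of $f$ is a nonempty $\Sigma\subseteq\Omega$ such that (a) for all $\alpha\in\Omega$, $(\alpha)f\in\Sigma$ iff $\alpha\in\Sigma$, and (b) no proper nonempty subset of $\Sigma$ satisfies (a). A forward cycle is an infinite cycle $\Sigma$ with $\Sigma\setminus(\Omega)f\ne\emptyset$; an open cycle is an infinite cycle that is not forward. $(f)\mathrm{C}_n$ ($n\in\mathbb{Z}_+$) is the cardinal number of cycles of cardinality $n$; $(f)\mathrm{C}_{\mathrm{open}}$, $(f)\mathrm{C}_{\mathrm{fwd}}$ the numbers of open and forward cycles. $f\approx_{\mathrm{fin}}g$ means: $(f)\mathrm{C}_{\mathrm{open}}=(g)\mathrm{C}_{\mathrm{open}}$; $(f)\mathrm{C}_{\mathrm{fwd}}=(g)\mathrm{C}_{\mathrm{fwd}}$; $(f)\mathrm{C}_n\ne(g)\mathrm{C}_n$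 for only finitely many $n$; and whenever $(f)\mathrm{C}_n\ne(g)\mathrm{C}_n$, both are finite. $f\approx_{\mathrm{even}} g$ means $f\approx_{\mathrm{fin}}g$ and $\sum_{n\in\mathbb{Z}_+}((f)\mathrm{C}_n-(g)\mathrm{C}_n)$ is an even integer, where a term is $0$ whenever $(f)\mathrm{C}_n=(g)\mathrm{C}_n$ (even if infinite). *)

From Stdlib Require Import List ZArith Arith Lia.
Import ListNotations.
Set Implicit Arguments.

Section Defs.
Variable Omega : Type.

Definition countably_infinite : Prop :=
  exists e : nat -> Omega, (forall m n, e m = e n -> m = n) /\ (forall y, exists n, e n = y).

Definition injective_map (f : Omega -> Omega) : Prop := forall x y, f x = f y -> x = y.

Definition same_set (S T : Omega -> Prop) : Prop := forall x, S x <-> T x.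

Definition set_finite (S : Omega -> Prop) : Prop := exists l : list Omega, forall x, S x -> In x l.
Definition set_infinite (S : Omega -> Prop) : Prop := ~ set_finite S.

Definition set_card (S : Omega -> Prop) (n : nat) : Prop :=
  exists l : list Omega, NoDup l /\ length l = n /\ forall x, S x <-> In x l.

Definition f_closed (f : Omega -> Omega) (S : Omega -> Prop) : Prop :=
  forall a, S (f a) <-> S a.

Definition is_cycle (f : Omega -> Omega) (S : Omega -> Prop) : Prop :=
  (exists x, S x) /\ f_closed f S /\
  forall T : Omega -> Prop,
    (forall x, T x -> S x) -> (exists x, T x) -> f_closed f T -> same_set T S.

Definition forward_cycle (f : Omega -> Omega) (S : Omega -> Prop) : Prop :=
  set_infinite S /\ exists x, S x /\ ~ exists y, f y = x.

Definition open_cycle (f : Omega -> Omega) (S : Omega -> Prop) : Prop :=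
  set_infinite S /\ ~ forward_cycle f S.

Definition count_exact (f : Omega -> Omega) (P : (Omega -> Prop) -> Prop) (k : nat) : Prop :=
  exists L : list (Omega -> Prop),
    length L = k /\
    (forall S, In S L -> is_cycle f S /\ P S) /\
    ForallOrdPairs (fun S T => ~ same_set S T) L /\
    (forall S, is_cycle f S -> P S -> exists T, In T L /\ same_set S T).

Definition count_finite f P : Prop := exists k, count_exact f P k.

(* Cycles are pairwise disjoint nonempty
   subsets of a countable set, so these cardinals lie in {0,1,2,...,aleph_0};
   hence equality of cardinals is equality of all exact finite counts. *)
Definition count_eq f (Pf : (Omega -> Prop) -> Prop) g (Pg : (Omega -> Prop) -> Prop) : Prop :=
  forall k, count_exact f Pf k <-> count_exact g Pg k.

Definition of_size (n : nat) : (Omega -> Prop) -> Prop := fun S => set_card S n.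

Definition Cn_eq f g (n : nat) : Prop := count_eq f (of_size n) g (of_size n).

Definition approx_fin (f g : Omega -> Omega) : Prop :=
  count_eq f (open_cycle f) g (open_cycle g) /\
  count_eq f (forward_cycle f) g (forward_cycle g) /\
  (exists N, forall n, N < n -> Cn_eq f g n) /\
  (forall n, 1 <= n -> ~ Cn_eq f g n ->
     count_finite f (of_size n) /\ count_finite g (of_size n)).

Definition Cn_diff f g (n : nat) (d : Z) : Prop :=
  (Cn_eq f g n /\ d = 0%Z) \/
  (exists a b, count_exact f (of_size n) a /\ count_exact g (of_size n) b /\
               d = (Z.of_nat a - Z.of_nat b)%Z).

Fixpoint sum_from1 (d : nat -> Z) (N : nat) : Z :=
  match N with 0 => 0%Z | S m => (sum_from1 d m + d (S m))%Z end.

Definition approx_even (f g : Omega -> Omega) : Prop :=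
  approx_fin f g /\
  exists (N : nat) (d : nat -> Z),
    (forall n, N < n -> Cn_eq f g n) /\
    (forall n, 1 <= n <= N -> Cn_diff f g n (d n)) /\
    Z.Even (sum_from1 d N).

Definition is_sym (h hinv : Omega -> Omega) : Prop :=
  (forall x, hinv (h x) = x) /\ (forall x, h (hinv x) = x).

Definition is_transposition (t : Omega -> Omega) : Prop :=
  exists a b, a <> b /\ t a = b /\ t b = a /\ forall x, x <> a -> x <> b -> t x = x.

(* composition of a list of maps, left to right: x (t1 t2 ... tk) *)
Fixpoint compose_lr (ts : list (Omega -> Omega)) (x : Omega) : Omega :=
  match ts with [] => x | t :: ts' => compose_lr ts' (t x) end.

(* Alt(Omega): finitary even permutations = products of an even number of
   transpositions *)
Definition is_alt (p : Omega -> Omega) : Prop :=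
  exists ts : list (Omega -> Omega),
    Nat.Even (length ts) /\ (forall t, In t ts -> is_transposition t) /\
    forall x, p x = compose_lr ts x.

Definition one_infinite_cycle (f : Omega -> Omega) : Prop :=
  exists S, is_cycle f S /\ set_infinite S /\
    forall T, is_cycle f T -> set_infinite T -> same_set S T.

End Defs.

(* A transposition changes the cycles of an injection only locally: it merges the two cycles
   through the transposed points, or splits the cycle containing both of them.  The infinite
   cycle takes part on both sides or on neither, so the number of finite cycles involved changes
   by an odd amount, and composing with a transposition flips the parity of
   sum_n ((f)C_n - (g)C_n).  Conjugation changes no cycle count, which gives one direction.
   Conversely, one transposition per cycle merges every finite cycle of length at most N into the
   infinite cycle.  Once this is done for f and for g, with N beyond the last n where their counts
   differ, the two resulting maps have the same cycle counts and the same surjectivity (which is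
   all the open and forward cycle counts record here), so a permutation matching their cycles
   conjugates one into the other; the parity hypothesis says that the transpositions used are
   even in number. *)

From Stdlib Require Import List ZArith Arith Lia Classical ClassicalEpsilon Wf_nat FinFun.
From Stdlib Require Import FunctionalExtensionality.
Import ListNotations.

Set Implicit Arguments.

Lemma least_witness (P : nat -> Prop) n : P n -> exists m, P m /\ forall k, P k -> m <= k.
Proof.
  intro Hn.
  destruct (dec_inh_nat_subset_has_unique_least_element P (fun k => classic (P k))
              (ex_intro _ n Hn)) as [m [[Hm Hmin] _]].
  eauto.
Qed.

(** * Orbits and periods *)

Section Orbits.
Context {Omega : Type}.
Implicit Types (f : Omega -> Omega) (x y z : Omega) (S T : Omega -> Prop).

Lemma same_set_sym S T : same_set S T -> same_set T S.
Proof. intros H z; specialize (H z); tauto. Qed.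

Lemma same_set_trans S T (U : Omega -> Prop) : same_set S T -> same_set T U -> same_set S U.
Proof. intros H H' z; specialize (H z); specialize (H' z); tauto. Qed.

Lemma iter_comm f m n x : Nat.iter m f (Nat.iter n f x) = Nat.iter n f (Nat.iter m f x).
Proof. rewrite <- !Nat.iter_add, Nat.add_comm; reflexivity. Qed.

Lemma iter_inj f : injective_map f -> forall n x y, Nat.iter n f x = Nat.iter n f y -> x = y.
Proof. intros Hf n; induction n; simpl; auto. Qed.

Definition orbit f x : Omega -> Prop := fun y => exists m n, Nat.iter m f x = Nat.iter n f y.

Lemma orbit_refl f x : orbit f x x.
Proof. exists 0, 0; reflexivity. Qed.

Lemma orbit_sym f x y : orbit f x y -> orbit f y x.
Proof. intros [m [n H]]; exists n, m; auto. Qed.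

Lemma orbit_trans f x y z : orbit f x y -> orbit f y z -> orbit f x z.
Proof.
  intros [m [n H]] [p [q H']]. exists (p + m), (n + q).
  rewrite !Nat.iter_add, H, iter_comm, H'; reflexivity.
Qed.

Lemma orbit_iter f x n : orbit f x (Nat.iter n f x).
Proof. exists n, 0; reflexivity. Qed.

Lemma orbit_apply f x y : orbit f x (f y) <-> orbit f x y.
Proof.
  split; intros [m [n H]].
  - exists m, (S n). rewrite Nat.iter_succ_r; auto.
  - exists (S m), n. simpl. rewrite H, <- Nat.iter_swap; reflexivity.
Qed.

Lemma orbit_same_set f x y : orbit f x y -> same_set (orbit f x) (orbit f y).
Proof.
  intros H z; split; intro.
  - apply orbit_trans with x; auto. apply orbit_sym; auto.
  - apply orbit_trans with y; auto.
Qed.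

Lemma f_closed_orbit f T x y : f_closed f T -> orbit f x y -> T x -> T y.
Proof.
  intros HT [m [n H]] Hx.
  assert (Hit : forall k w, T (Nat.iter k f w) <-> T w).
  { intros k w; induction k; simpl; [tauto|]. rewrite (HT (Nat.iter k f w)); auto. }
  apply (Hit n). rewrite <- H. apply Hit; auto.
Qed.

Lemma is_cycle_orbit f x : is_cycle f (orbit f x).
Proof.
  split; [exists x; apply orbit_refl|split].
  - intro a. apply orbit_apply.
  - intros T HTS [y Hy] HT z. split; auto. intro Hz.
    apply (f_closed_orbit HT (y := z) (x := y)); auto.
    apply orbit_trans with x; auto. apply orbit_sym; auto.
Qed.

Lemma cycle_orbit f S x : is_cycle f S -> S x -> same_set S (orbit f x).
Proof.
  intros [_ [HS Hmin]] Hx.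
  apply same_set_sym, Hmin.
  - intros z Hz. apply (f_closed_orbit HS Hz Hx).
  - exists x; apply orbit_refl.
  - intro a; apply orbit_apply.
Qed.

Definition period f x p :=
  0 < p /\ Nat.iter p f x = x /\ forall d, 0 < d < p -> Nat.iter d f x <> x.

Definition periodic f x := exists p, period f x p.

Lemma period_unique f x p q : period f x p -> period f x q -> p = q.
Proof.
  intros [Hp1 [Hp2 Hp3]] [Hq1 [Hq2 Hq3]].
  destruct (Nat.lt_total p q) as [Hl|[He|Hl]]; auto; exfalso.
  - apply (Hq3 p); auto.
  - apply (Hp3 q); auto.
Qed.

Lemma iter_mod_period f x p n : period f x p -> Nat.iter n f x = Nat.iter (n mod p) f x.
Proof.
  intros [Hp [Hx _]].
  assert (Hmul : forall q, Nat.iter (q * p) f x = x).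
  { induction q; simpl; auto. rewrite Nat.iter_add, IHq; auto. }
  transitivity (Nat.iter (n mod p + n / p * p) f x).
  - f_equal. pose proof (Nat.div_mod_eq n p); lia.
  - rewrite Nat.iter_add, Hmul; reflexivity.
Qed.

Lemma period_divides f x p d : period f x p -> (Nat.iter d f x = x <-> d mod p = 0).
Proof.
  intros Hp. rewrite (iter_mod_period d Hp). split; intro H.
  - destruct (Nat.eq_dec (d mod p) 0) as [|Hne]; auto. exfalso.
    destruct Hp as [H1 [_ H3]]. apply (H3 (d mod p)); auto.
    split; [lia|apply Nat.mod_upper_bound; lia].
  - rewrite H; reflexivity.
Qed.

Lemma periodic_of_return f x d : 0 < d -> Nat.iter d f x = x -> periodic f x.
Proof.
  intros Hd E.
  destruct (least_witness (fun d => 0 < d /\ Nat.iter d f x = x) d) as [m [[H1 H2] H3]]; auto.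
  exists m. split; auto; split; auto.
  intros e He E'. specialize (H3 e (conj (proj1 He) E')). lia.
Qed.

Lemma aperiodic_iter f x : ~ periodic f x -> forall d, Nat.iter d f x = x <-> d = 0.
Proof.
  intros H d. split; [|intros ->; auto]. intro E.
  destruct d; auto. exfalso. apply H. eapply periodic_of_return; [|exact E]; lia.
Qed.

Lemma periodic_preimage f x : periodic f x -> exists w, f w = x.
Proof.
  intros [p [H1 [H2 _]]]. exists (Nat.iter (p - 1) f x).
  rewrite <- Nat.iter_succ. replace (S (p - 1)) with p by lia; auto.
Qed.

Lemma not_surjective_aperiodic f :
  ~ Surjective f -> exists r, ~ periodic f r /\ ~ exists w, f w = r.
Proof.
  intros Hs. apply not_all_ex_not in Hs as [r Hr].
  exists r. split; auto. intro Hp. apply Hr, (periodic_preimage Hp).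
Qed.

Lemma set_card_unique S n m : set_card S n -> set_card S m -> n = m.
Proof.
  intros [l [Hl1 [Hl2 Hl3]]] [l' [Hl1' [Hl2' Hl3']]].
  assert (length l <= length l').
  { apply NoDup_incl_length; auto. intros z Hz. apply Hl3', Hl3; auto. }
  assert (length l' <= length l).
  { apply NoDup_incl_length; auto. intros z Hz. apply Hl3, Hl3'; auto. }
  lia.
Qed.

Lemma set_card_same_set S T n : same_set S T -> set_card S n -> set_card T n.
Proof.
  intros H [l [A [B C]]]. exists l; split; auto; split; auto.
  intro z; rewrite <- (H z); auto.
Qed.

Section Injective.
Variable f : Omega -> Omega.
Hypothesis Hf : injective_map f.

Lemma iter_sub_eq x y m n : n <= m -> Nat.iter m f x = Nat.iter n f y -> Nat.iter (m - n) f x = y.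
Proof.
  intros Hnm E. apply (iter_inj Hf n). rewrite <- Nat.iter_add.
  replace (n + (m - n)) with m by lia; auto.
Qed.

Lemma orbit_period_iff x p y :
  period f x p -> (orbit f x y <-> exists i, i < p /\ y = Nat.iter i f x).
Proof.
  intros Hp. assert (Hp0 : 0 < p) by apply Hp. split.
  - intros [m [n H]].
    assert (E : Nat.iter (n * p + m) f x = Nat.iter n f y).
    { rewrite Nat.iter_add, <- H, iter_comm, (iter_mod_period (n * p) Hp), Nat.Div0.mod_mul.
      reflexivity. }
    apply iter_sub_eq in E; [|nia].
    exists ((n * p + m - n) mod p). split.
    + apply Nat.mod_upper_bound; lia.
    + rewrite <- E. apply iter_mod_period; auto.
  - intros [i [_ ->]]. apply orbit_iter.
Qed.

Lemma set_card_orbit x p : period f x p -> set_card (orbit f x) p.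
Proof.
  intros Hp. exists (map (fun i => Nat.iter i f x) (seq 0 p)). split; [|split].
  - apply NoDup_map_NoDup_ForallPairs; [|apply seq_NoDup].
    intros i j Hi Hj E. apply in_seq in Hi, Hj. destruct Hp as [_ [_ Hm]].
    destruct (Nat.lt_total i j) as [Hl|[He|Hl]]; auto; exfalso.
    + symmetry in E. apply iter_sub_eq in E; [|lia]. apply (Hm (j - i)); auto; lia.
    + apply iter_sub_eq in E; [|lia]. apply (Hm (i - j)); auto; lia.
  - rewrite length_map, length_seq; auto.
  - intro y. rewrite (orbit_period_iff y Hp), in_map_iff.
    split; intros [i [H1 H2]]; exists i; split; auto.
    + apply in_seq; lia.
    + apply in_seq in H2; lia.
Qed.

Lemma periodic_of_finite_orbit x : set_finite (orbit f x) -> periodic f x.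
Proof.
  intros [l Hl].
  assert (Hrep : exists i j, i < j /\ Nat.iter i f x = Nat.iter j f x).
  { apply NNPP. intro Hno.
    assert (ND : NoDup (map (fun i => Nat.iter i f x) (seq 0 (S (length l))))).
    { apply NoDup_map_NoDup_ForallPairs; [|apply seq_NoDup].
      intros i j _ _ E. destruct (Nat.lt_total i j) as [Hlt|[He|Hlt]]; auto; exfalso; eauto. }
    apply NoDup_incl_length with (l' := l) in ND.
    - rewrite length_map, length_seq in ND. lia.
    - intros y Hy. apply in_map_iff in Hy. destruct Hy as [i [<- _]]. apply Hl, orbit_iter. }
  destruct Hrep as [i [j [Hij E]]]. symmetry in E. apply iter_sub_eq in E; [|lia].
  eapply periodic_of_return; [|exact E]; lia.
Qed.

Lemma finite_orbit_iff x : set_finite (orbit f x) <-> periodic f x.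
Proof.
  split; [apply periodic_of_finite_orbit|].
  intros [p Hp]. destruct (set_card_orbit Hp) as [l [_ [_ H]]].
  exists l; intros; apply H; auto.
Qed.

Lemma period_of_set_card x n : set_card (orbit f x) n -> period f x n.
Proof.
  intros Hc. assert (Hfin : set_finite (orbit f x)).
  { destruct Hc as [l [_ [_ H]]]; exists l; intros; apply H; auto. }
  destruct (periodic_of_finite_orbit Hfin) as [p Hp].
  rewrite (set_card_unique Hc (set_card_orbit Hp)); auto.
Qed.

Lemma period_orbit x y p : period f x p -> orbit f x y -> period f y p.
Proof.
  intros Hp Hxy. apply (orbit_period_iff y Hp) in Hxy as [i [Hi ->]].
  destruct Hp as [H1 [H2 H3]]. split; auto; split.
  - rewrite iter_comm, H2; reflexivity.
  - intros d Hd E. rewrite iter_comm in E. apply (iter_inj Hf i) in E. apply (H3 d); auto.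
Qed.

Lemma periodic_orbit x y : periodic f x -> orbit f x y -> periodic f y.
Proof. intros [p Hp] Hxy. exists p. apply (period_orbit Hp Hxy). Qed.

End Injective.
End Orbits.

(** * Counting cycles *)

Definition holds (P : Prop) : bool := if excluded_middle_informative P then true else false.

Lemma holds_spec (P : Prop) : holds P = true <-> P.
Proof. unfold holds. destruct (excluded_middle_informative P); split; auto; discriminate. Qed.

Lemma b2n_holds_inj (P Q : Prop) : Nat.b2n (holds P) = Nat.b2n (holds Q) <-> (P <-> Q).
Proof.
  unfold holds.
  destruct (excluded_middle_informative P), (excluded_middle_informative Q); simpl;
    split; intros; try tauto; discriminate.
Qed.

Lemma ForallOrdPairs_filter {A} (R : A -> A -> Prop) p (l : list A) :
  ForallOrdPairs R l -> ForallOrdPairs R (filter p l).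
Proof.
  induction 1 as [|a l Ha Hl IH]; simpl; [constructor|].
  destruct (p a); auto. constructor; auto.
  rewrite Forall_forall in *. intros x Hx. apply filter_In in Hx. apply Ha; tauto.
Qed.

Lemma ForallOrdPairs_app {A} (R : A -> A -> Prop) (l1 l2 : list A) :
  ForallOrdPairs R l1 -> ForallOrdPairs R l2 -> (forall x y, In x l1 -> In y l2 -> R x y) ->
  ForallOrdPairs R (l1 ++ l2).
Proof.
  induction 1 as [|a l1 Ha Hl IH]; intros H2 H3; simpl; auto. constructor.
  - rewrite Forall_forall in *. intros y Hy. apply in_app_or in Hy as [Hy|Hy]; auto.
    apply H3; simpl; auto.
  - apply IH; auto. intros; apply H3; simpl; auto.
Qed.

Lemma ForallOrdPairs_map {A B} (R : A -> A -> Prop) (R' : B -> B -> Prop) (h : A -> B) l :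
  (forall x y, In x l -> In y l -> R x y -> R' (h x) (h y)) ->
  ForallOrdPairs R l -> ForallOrdPairs R' (map h l).
Proof.
  intros Hh HR. induction HR as [|a l Ha Hl IH]; simpl; constructor.
  - rewrite Forall_forall in *. intros y Hy. apply in_map_iff in Hy as [x [<- Hx]].
    apply Hh; simpl; auto.
  - apply IH. intros; apply Hh; simpl; auto.
Qed.

Section Counting.
Context {Omega : Type}.
Implicit Types (f g : Omega -> Omega) (S T : Omega -> Prop) (L : list (Omega -> Prop)).

Definition respects_same_set (P : (Omega -> Prop) -> Prop) :=
  forall S T, same_set S T -> P S -> P T.

Lemma length_le_of_cover L1 L2 :
  ForallOrdPairs (fun S T => ~ same_set S T) L1 ->
  (forall S, In S L1 -> exists T, In T L2 /\ same_set S T) ->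
  length L1 <= length L2.
Proof.
  revert L2. induction L1 as [|S L1 IH]; intros L2 HF HM; simpl; [lia|].
  inversion HF as [|? ? H1 H2]; subst. rewrite Forall_forall in H1.
  destruct (HM S (or_introl eq_refl)) as [T [HT HST]].
  apply in_split in HT as [A [B ->]].
  assert (length L1 <= length (A ++ B)).
  { apply IH; auto. intros S' HS'. destruct (HM S' (or_intror HS')) as [T' [HT' HST']].
    exists T'. split; auto. apply in_app_or in HT' as [HA|[HE|HB]]; try (apply in_or_app; auto).
    subst T'. exfalso. apply (H1 S' HS').
    apply same_set_trans with T; auto. apply same_set_sym; auto. }
  rewrite length_app in *; simpl; lia.
Qed.

Lemma count_exact_unique f P k k' : count_exact f P k -> count_exact f P k' -> k = k'.
Proof.
  intros [L1 [A1 [B1 [C1 D1]]]] [L2 [A2 [B2 [C2 D2]]]]. subst.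
  apply Nat.le_antisymm; apply length_le_of_cover; auto; intros S HS.
  - destruct (B1 S HS). apply D2; auto.
  - destruct (B2 S HS). apply D1; auto.
Qed.

Lemma count_eq_exact f g P Q j k :
  count_exact f P j -> count_exact g Q k -> (count_eq f P g Q <-> j = k).
Proof.
  intros Hj Hk. split.
  - intro E. apply (count_exact_unique (proj1 (E j) Hj) Hk).
  - intros -> k'. split; intro H.
    + rewrite (count_exact_unique H Hj); auto.
    + rewrite (count_exact_unique H Hk); auto.
Qed.

Lemma count_exact_ext f P P' k : (forall S, is_cycle f S -> (P S <-> P' S)) ->
  count_exact f P k -> count_exact f P' k.
Proof.
  intros HP [L [A [B [C D]]]]. exists L. split; auto; split; [|split]; auto.
  - intros S HS. destruct (B S HS). split; auto. apply HP; auto.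
  - intros S HS HP'. apply D; auto. apply HP; auto.
Qed.

Lemma count_exact_transfer f g P k : (forall S, P S -> (is_cycle f S <-> is_cycle g S)) ->
  count_exact f P k -> count_exact g P k.
Proof.
  intros HP [L [A [B [C D]]]]. exists L. split; auto; split; [|split]; auto.
  - intros S HS. destruct (B S HS) as [H1 H2]. split; auto. apply (HP S H2); auto.
  - intros S HS HP'. apply D; auto. apply (HP S HP'); auto.
Qed.

Lemma count_exact_0 f P : (forall S, is_cycle f S -> ~ P S) -> count_exact f P 0.
Proof.
  intros H. exists []. split; auto; split; [|split].
  - intros S [].
  - constructor.
  - intros S HS HP; exfalso; eapply H; eauto.
Qed.

Lemma count_exact_1 f P S0 : is_cycle f S0 -> P S0 ->
  (forall S, is_cycle f S -> P S -> same_set S S0) -> count_exact f P 1.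
Proof.
  intros H1 H2 H3. exists [S0]. split; auto; split; [|split].
  - intros S [<-|[]]; auto.
  - repeat constructor.
  - intros S HS HP; exists S0; split; simpl; auto.
Qed.

Lemma count_exact_split f P Q k : respects_same_set Q -> count_exact f P k ->
  exists k1 k2, count_exact f (fun S => P S /\ Q S) k1 /\
                count_exact f (fun S => P S /\ ~ Q S) k2 /\ k = k1 + k2.
Proof.
  intros HQ [L [A [B [C D]]]].
  set (q := fun S => holds (Q S)).
  exists (length (filter q L)), (length (filter (fun S => negb (q S)) L)).
  split; [|split].
  - exists (filter q L). split; auto. split; [|split].
    + intros S HS. apply filter_In in HS as [H1 H2]. unfold q in H2. rewrite holds_spec in H2.
      destruct (B S H1); tauto.
    + apply ForallOrdPairs_filter; auto.
    + intros S HS [HP HQS]. destruct (D S HS HP) as [T [HT HST]]. exists T; split; auto.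
      apply filter_In; split; auto. unfold q. rewrite holds_spec. eapply HQ; eauto.
  - exists (filter (fun S => negb (q S)) L). split; auto. split; [|split].
    + intros S HS. apply filter_In in HS as [H1 H2].
      unfold q in H2. rewrite Bool.negb_true_iff, <- Bool.not_true_iff_false, holds_spec in H2.
      destruct (B S H1); tauto.
    + apply ForallOrdPairs_filter; auto.
    + intros S HS [HP HQS]. destruct (D S HS HP) as [T [HT HST]]. exists T; split; auto.
      apply filter_In; split; auto. unfold q.
      rewrite Bool.negb_true_iff, <- Bool.not_true_iff_false, holds_spec. intro HT'.
      apply HQS, (HQ T S); auto. apply same_set_sym; auto.
  - subst. clear. induction L as [|S L IH]; simpl; auto. destruct (q S); simpl; lia.
Qed.

Lemma count_exact_union f P Q k1 k2 : respects_same_set Q ->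
  count_exact f (fun S => P S /\ Q S) k1 -> count_exact f (fun S => P S /\ ~ Q S) k2 ->
  count_exact f P (k1 + k2).
Proof.
  intros HQ [L1 [A1 [B1 [C1 D1]]]] [L2 [A2 [B2 [C2 D2]]]].
  exists (L1 ++ L2). split; [rewrite length_app; lia|split; [|split]].
  - intros S HS. apply in_app_or in HS as [H|H];
      [destruct (B1 S H) as [? [? ?]]|destruct (B2 S H) as [? [? ?]]]; auto.
  - apply ForallOrdPairs_app; auto. intros S T HS HT HST.
    destruct (B1 S HS) as [_ [_ H1]]. destruct (B2 T HT) as [_ [_ H2]]. apply H2. eapply HQ; eauto.
  - intros S HS HP. destruct (classic (Q S)) as [H|H].
    + destruct (D1 S HS (conj HP H)) as [T [? ?]]; exists T; split; auto; apply in_or_app; auto.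
    + destruct (D2 S HS (conj HP H)) as [T [? ?]]; exists T; split; auto; apply in_or_app; auto.
Qed.

End Counting.

(** * Conjugate maps *)

Section Conjugation.
Context {Omega : Type}.
Implicit Types (f g phi psi : Omega -> Omega) (S T : Omega -> Prop).

Definition conjugate_by f g phi psi :=
  (forall x, psi (phi x) = x) /\ (forall y, phi (psi y) = y) /\ (forall x, phi (f x) = g (phi x)).

Lemma conjugate_by_sym f g phi psi : conjugate_by f g phi psi -> conjugate_by g f psi phi.
Proof.
  intros [H1 [H2 H3]]. split; auto; split; auto.
  intro y. rewrite <- (H2 y) at 1. rewrite <- H3, !H1; reflexivity.
Qed.

Lemma conjugate_surjective f g phi psi :
  conjugate_by f g phi psi -> Surjective f -> Surjective g.
Proof.
  intros [H1 [H2 H3]] Hs y. destruct (Hs (psi y)) as [x Hx].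
  exists (phi x). rewrite <- H3, Hx; auto.
Qed.

Lemma conjugate_f_closed f g phi psi S :
  conjugate_by f g phi psi -> f_closed f S -> f_closed g (fun y => S (psi y)).
Proof.
  intros [H1 [H2 H3]] HS y. rewrite <- (H2 y) at 1. rewrite <- H3, H1. apply HS.
Qed.

Lemma conjugate_cycle f g phi psi S :
  conjugate_by f g phi psi -> is_cycle f S -> is_cycle g (fun y => S (psi y)).
Proof.
  intros Hc [[x Hx] [HS Hmin]]. pose proof Hc as [H1 [H2 _]].
  split; [exists (phi x); rewrite H1; auto|split].
  - apply (conjugate_f_closed Hc HS).
  - intros T HT [y Hy] HTc.
    assert (E : same_set (fun x => T (phi x)) S).
    { apply Hmin.
      - intros z Hz. specialize (HT _ Hz). simpl in HT. rewrite H1 in HT; auto.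
      - exists (psi y). rewrite H2; auto.
      - apply (conjugate_f_closed (conjugate_by_sym Hc) HTc). }
    intro z. rewrite <- (E (psi z)), H2. tauto.
Qed.

Lemma set_card_conjugate phi psi S n : (forall x, psi (phi x) = x) -> (forall y, phi (psi y) = y) ->
  set_card S n -> set_card (fun y => S (psi y)) n.
Proof.
  intros H1 H2 [l [A [B C]]]. exists (map phi l). split; [|split].
  - apply NoDup_map_NoDup_ForallPairs; auto. intros x y _ _ E.
    rewrite <- (H1 x), <- (H1 y), E; auto.
  - rewrite length_map; auto.
  - intro y. rewrite (C (psi y)), in_map_iff. split.
    + intro; exists (psi y); auto.
    + intros [x [<- Hx]]. rewrite H1; auto.
Qed.

Lemma count_exact_conjugate f g phi psi n k : conjugate_by f g phi psi ->
  count_exact f (of_size n) k -> count_exact g (of_size n) k.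
Proof.
  intros Hc [L [A [B [C D]]]]. pose proof Hc as [H1 [H2 _]].
  exists (map (fun S y => S (psi y)) L). split; [rewrite length_map; auto|split; [|split]].
  - intros T HT. apply in_map_iff in HT as [S [<- HS]]. destruct (B S HS).
    split; [apply (conjugate_cycle Hc)|apply set_card_conjugate with phi]; auto.
  - apply ForallOrdPairs_map with (2 := C). intros S T _ _ HST HE.
    apply HST. intro z. rewrite <- (H1 z). apply (HE (phi z)).
  - intros T HT HTs.
    destruct (D (fun x => T (phi x))) as [S [HS HSe]].
    + apply (conjugate_cycle (conjugate_by_sym Hc) HT).
    + apply set_card_conjugate with psi; auto.
    + exists (fun y => S (psi y)). split; [apply (in_map (fun S y => S (psi y))); auto|].
      intro y. specialize (HSe (psi y)). simpl in HSe. rewrite H2 in HSe. tauto.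
Qed.

End Conjugation.

(** * Maps with one infinite cycle *)

Section OneInfiniteCycle.
Context {Omega : Type}.
Implicit Types (f g : Omega -> Omega) (x y z : Omega) (S T : Omega -> Prop).

Definition one_aperiodic_orbit f :=
  (exists x, ~ periodic f x) /\ forall x y, ~ periodic f x -> ~ periodic f y -> orbit f x y.

Lemma set_infinite_same_set S T : same_set S T -> set_infinite S -> set_infinite T.
Proof. intros E Hi [l Hl]. apply Hi. exists l; intros; apply Hl, E; auto. Qed.

Lemma infinite_orbit_iff f x : injective_map f -> (set_infinite (orbit f x) <-> ~ periodic f x).
Proof. intros Hf. unfold set_infinite. rewrite finite_orbit_iff; tauto. Qed.

Lemma infinite_cycle_iff f S x : injective_map f -> is_cycle f S -> S x ->
  (set_infinite S <-> ~ periodic f x).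
Proof.
  intros Hf HS Hx. pose proof (cycle_orbit x HS Hx) as E.
  rewrite <- infinite_orbit_iff by auto. split; apply set_infinite_same_set; auto.
  apply same_set_sym; auto.
Qed.

Lemma one_infinite_cycle_iff f :
  injective_map f -> (one_infinite_cycle f <-> one_aperiodic_orbit f).
Proof.
  intros Hf. split.
  - intros [I [HI [Hinf Hu]]]. pose proof HI as [[x Hx] _]. split.
    + exists x. apply (infinite_cycle_iff _ Hf HI Hx); auto.
    + assert (HuI : forall y, ~ periodic f y -> same_set I (orbit f y)).
      { intros y Hy. apply Hu; [apply is_cycle_orbit|apply infinite_orbit_iff; auto]. }
      intros y z Hy Hz. apply (HuI y Hy z), (HuI z Hz z), orbit_refl.
  - intros [[x0 Hx0] Hc]. exists (orbit f x0). split; [apply is_cycle_orbit|split].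
    + apply infinite_orbit_iff; auto.
    + intros T HT HTi. pose proof HT as [[z Hz] _].
      apply same_set_trans with (orbit f z).
      * apply orbit_same_set, Hc; auto. apply (infinite_cycle_iff _ Hf HT Hz); auto.
      * apply same_set_sym, cycle_orbit; auto.
Qed.

Lemma forward_cycle_same_set f S T : same_set S T -> forward_cycle f S -> forward_cycle f T.
Proof.
  intros E [Hi [x [Hx Hn]]]. split; [apply (set_infinite_same_set E); auto|].
  exists x; split; auto. apply E; auto.
Qed.

Section Aperiodic.
Variable f : Omega -> Omega.
Hypothesis Hf : injective_map f.
Hypothesis Hone : one_aperiodic_orbit f.
Variable x0 : Omega.
Hypothesis Hx0 : ~ periodic f x0.

Lemma infinite_cycle_orbit S : is_cycle f S -> set_infinite S -> same_set S (orbit f x0).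
Proof.
  intros HS Hi. pose proof HS as [[z Hz] _].
  apply same_set_trans with (orbit f z); [apply cycle_orbit; auto|].
  apply orbit_same_set, (proj2 Hone); auto. apply (infinite_cycle_iff _ Hf HS Hz); auto.
Qed.

Lemma aperiodic_forward : forward_cycle f (orbit f x0) <-> ~ Surjective f.
Proof.
  split.
  - intros [_ [x [_ Hx]]] Hs. apply Hx, Hs.
  - intro Hs. destruct (not_surjective_aperiodic Hs) as [y [Hyn Hy]].
    split; [apply infinite_orbit_iff; auto|].
    exists y. split; auto. apply (proj2 Hone); auto.
Qed.

Lemma count_exact_infinite P : (forall S, P S -> set_infinite S) -> respects_same_set P ->
  count_exact f P (Nat.b2n (holds (P (orbit f x0)))).
Proof.
  intros HPi HP. unfold holds. destruct (excluded_middle_informative (P (orbit f x0))) as [H|H].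
  - apply count_exact_1 with (orbit f x0); auto; [apply is_cycle_orbit|].
    intros S HS HPS. apply infinite_cycle_orbit; auto.
  - apply count_exact_0. intros S HS HPS. apply H, (HP S); auto.
    apply infinite_cycle_orbit; auto.
Qed.

Lemma count_open_cycles : count_exact f (open_cycle f) (Nat.b2n (holds (Surjective f))).
Proof.
  replace (Nat.b2n (holds (Surjective f))) with (Nat.b2n (holds (open_cycle f (orbit f x0)))).
  - apply count_exact_infinite; [intros S []; auto|].
    intros S T E [Hi Hnf]. split; [apply (set_infinite_same_set E); auto|].
    intro Hfw. apply Hnf, (forward_cycle_same_set (same_set_sym E) Hfw).
  - apply b2n_holds_inj. unfold open_cycle. rewrite aperiodic_forward.
    pose proof (proj2 (infinite_orbit_iff x0 Hf) Hx0). split; [intros [_ Hnf]; apply NNPP|]; tauto.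
Qed.

Lemma count_forward_cycles : count_exact f (forward_cycle f) (Nat.b2n (holds (~ Surjective f))).
Proof.
  replace (Nat.b2n (holds (~ Surjective f))) with (Nat.b2n (holds (forward_cycle f (orbit f x0)))).
  - apply count_exact_infinite; [intros S []; auto|]. intros S T; apply forward_cycle_same_set.
  - apply b2n_holds_inj, aperiodic_forward.
Qed.

End Aperiodic.
End OneInfiniteCycle.

Section CycleCount.
Context {Omega : Type}.
Implicit Types (f g phi psi : Omega -> Omega).

Definition admissible f :=
  injective_map f /\ one_aperiodic_orbit f /\ forall n, count_finite f (of_size n).

(* Meaningful only when the count is finite, which [admissible] guarantees. *)
Definition cycle_count f n : nat := epsilon (inhabits 0) (count_exact f (of_size n)).

Lemma cycle_count_spec f n :
  count_finite f (of_size n) -> count_exact f (of_size n) (cycle_count f n).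
Proof. apply epsilon_spec. Qed.

Lemma cycle_count_eq f n k : count_exact f (of_size n) k -> cycle_count f n = k.
Proof. intro H. apply (count_exact_unique (cycle_count_spec (ex_intro _ k H)) H). Qed.

Lemma count_exact_size0 f : count_exact f (of_size 0) 0.
Proof.
  apply count_exact_0. intros S [[x Hx] _] [[|y l] [_ [Hl H]]]; [|discriminate].
  apply (H x); auto.
Qed.

Lemma admissible_intro f : injective_map f -> one_infinite_cycle f ->
  (forall n, 1 <= n -> count_finite f (of_size n)) -> admissible f.
Proof.
  intros H1 H2 H3. split; auto. split; [apply one_infinite_cycle_iff; auto|].
  intros [|n]; [exists 0; apply count_exact_size0|apply H3; lia].
Qed.

Lemma Cn_eq_iff f g n : admissible f -> admissible g ->
  (Cn_eq f g n <-> cycle_count f n = cycle_count g n).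
Proof.
  intros [_ [_ Hf]] [_ [_ Hg]].
  apply count_eq_exact; apply cycle_count_spec; auto.
Qed.

Lemma cycle_count_conjugate f g phi psi n : conjugate_by f g phi psi -> admissible g ->
  cycle_count f n = cycle_count g n.
Proof.
  intros Hc [_ [_ Hg]]. apply cycle_count_eq.
  apply (count_exact_conjugate (conjugate_by_sym Hc)), cycle_count_spec, Hg.
Qed.

Lemma count_eq_open_iff f g : admissible f -> admissible g ->
  (count_eq f (open_cycle f) g (open_cycle g) <-> (Surjective f <-> Surjective g)).
Proof.
  intros [Hf [Of _]] [Hg [Og _]]. pose proof Of as [[x Hx] _]. pose proof Og as [[y Hy] _].
  rewrite (count_eq_exact (count_open_cycles Hf Of Hx) (count_open_cycles Hg Og Hy)).
  apply b2n_holds_inj.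
Qed.

Lemma count_eq_forward_iff f g : admissible f -> admissible g ->
  (count_eq f (forward_cycle f) g (forward_cycle g) <-> (Surjective f <-> Surjective g)).
Proof.
  intros [Hf [Of _]] [Hg [Og _]]. pose proof Of as [[x Hx] _]. pose proof Og as [[y Hy] _].
  rewrite (count_eq_exact (count_forward_cycles Hf Of Hx) (count_forward_cycles Hg Og Hy)).
  rewrite b2n_holds_inj. split; [|tauto]. intro E; split; intro H; apply NNPP; tauto.
Qed.

End CycleCount.

(** * Composing with a transposition *)

Section Transposition.
Context {Omega : Type}.
Implicit Types (F G t : Omega -> Omega) (a b x y z : Omega) (S T : Omega -> Prop).

Definition swaps t a b := a <> b /\ t a = b /\ t b = a /\ forall x, x <> a -> x <> b -> t x = x.

Definition transposed t a b F G := swaps t a b /\ forall x, G x = t (F x).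

Lemma swaps_sym t a b : swaps t a b -> swaps t b a.
Proof. intros [Hab [Ha [Hb Ho]]]. repeat split; auto. Qed.

Lemma swaps_involutive t a b : swaps t a b -> forall x, t (t x) = x.
Proof.
  intros [Hab [Ha [Hb Ho]]] x.
  destruct (classic (x = a)) as [->|Hxa]; [rewrite Ha; auto|].
  destruct (classic (x = b)) as [->|Hxb]; [rewrite Hb; auto|].
  rewrite (Ho x Hxa Hxb). apply Ho; auto.
Qed.

Lemma swaps_preserves t a b S : swaps t a b -> ~ S a -> ~ S b -> forall z, S (t z) <-> S z.
Proof.
  intros [Hab [Ha [Hb Ho]]] HSa HSb z.
  destruct (classic (z = a)) as [->|Hza]; [rewrite Ha; tauto|].
  destruct (classic (z = b)) as [->|Hzb]; [rewrite Hb; tauto|].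
  rewrite Ho; tauto.
Qed.

Lemma transposed_sym t a b F G : transposed t a b F G -> transposed t a b G F.
Proof.
  intros [Ht HG]. split; auto. intro x. rewrite HG, (swaps_involutive Ht); auto.
Qed.

Lemma transposed_swap t a b F G : transposed t a b F G -> transposed t b a F G.
Proof. intros [Ht HG]. split; auto. apply swaps_sym; auto. Qed.

Lemma transposed_injective t a b F G :
  transposed t a b F G -> injective_map F -> injective_map G.
Proof.
  intros HT HF x y E. apply HF. destruct (transposed_sym HT) as [_ HF'].
  rewrite !HF', E; auto.
Qed.

Lemma transposed_surjective t a b F G : transposed t a b F G -> Surjective F -> Surjective G.
Proof.
  intros [Ht HG] HF y. destruct (HF (t y)) as [x Hx].
  exists x. rewrite HG, Hx, (swaps_involutive Ht); auto.
Qed.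

Lemma untouched_cycle t a b F G S :
  transposed t a b F G -> is_cycle F S -> ~ S a -> ~ S b -> is_cycle G S.
Proof.
  intros [Ht HG] [Hne [HS Hmin]] Ha Hb. split; auto. split.
  - intro x. rewrite HG, (swaps_preserves _ Ht Ha Hb). apply HS.
  - intros T HT Hne' HTc. apply Hmin; auto.
    assert (Ta : ~ T a) by (intro; apply Ha; auto).
    assert (Tb : ~ T b) by (intro; apply Hb; auto).
    intro x. rewrite <- (swaps_preserves _ Ht Ta Tb (F x)), <- HG. apply HTc.
Qed.

Lemma untouched_orbit t a b F G x : transposed t a b F G ->
  ~ (orbit F a x \/ orbit F b x) -> same_set (orbit F x) (orbit G x).
Proof.
  intros HT Hn. apply (cycle_orbit x); [|apply orbit_refl].
  apply (untouched_cycle HT (is_cycle_orbit F x));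
    intro H; apply Hn; [left|right]; apply orbit_sym; auto.
Qed.

Lemma touched_orbit t a b F G x : transposed t a b F G ->
  orbit G a x \/ orbit G b x -> orbit F a x \/ orbit F b x.
Proof.
  intros HT H. apply NNPP. intro Hn. pose proof (untouched_orbit HT Hn) as E.
  apply Hn. destruct H as [H|H]; [left|right]; apply orbit_sym, E, orbit_sym; auto.
Qed.

(* Until the [F]-orbit of [a] returns to [a] or reaches [b], the transposition does not act. *)
Lemma transposed_iter t a b F G k : transposed t a b F G -> 0 < k ->
  (forall j, 0 < j < k -> Nat.iter j F a <> a /\ Nat.iter j F a <> b) ->
  (forall i, i < k -> Nat.iter i G a = Nat.iter i F a) /\ Nat.iter k G a = t (Nat.iter k F a).
Proof.
  intros [[_ [_ [_ Hto]]] HG] Hk Hj.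
  assert (E : forall i, i < k -> Nat.iter i G a = Nat.iter i F a).
  { induction i as [|i IH]; intros Hi; simpl; auto. rewrite HG, IH by lia.
    rewrite <- Nat.iter_succ. apply Hto; apply Hj; lia. }
  split; auto. destruct k as [|k]; [lia|]. simpl. rewrite HG, E; auto.
Qed.

Lemma transposed_merge t a b F G p : transposed t a b F G ->
  period F a p -> ~ orbit F a b -> orbit G a b.
Proof.
  intros HT [Hp1 [Hp2 Hp3]] Hn. pose proof HT as [[_ [Hta _]] _].
  destruct (transposed_iter HT Hp1) as [_ E].
  - intros j Hj. split; [apply Hp3; auto|intro E; apply Hn; exists j, 0; auto].
  - exists p, 0. rewrite E, Hp2; auto.
Qed.

Section Split.
Variables (t F G : Omega -> Omega) (a b : Omega).
Hypothesis HF : injective_map F.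
Hypothesis HT : transposed t a b F G.

(* The arc [a, F a, ..., F^(k-1) a] closes up into a [G]-cycle. *)
Lemma transposed_split_at k : 0 < k -> Nat.iter k F a = b ->
  (forall j, 0 < j < k -> Nat.iter j F a <> b) -> period G a k /\ ~ orbit G a b.
Proof.
  intros Hk Hb Hmin. pose proof HT as [[_ [_ [Htb _]]] _].
  assert (Na : forall j, 0 < j < k -> Nat.iter j F a <> a).
  { intros j Hj E. apply (Hmin (k - j)); [lia|]. rewrite <- Hb.
    transitivity (Nat.iter (k - j + j) F a); [rewrite Nat.iter_add, E; auto|f_equal; lia]. }
  destruct (transposed_iter HT Hk) as [E Ek]; [intros j Hj; split; auto|].
  assert (Hp : period G a k).
  { split; auto; split; [rewrite Ek, Hb; auto|].
    intros d Hd. rewrite E by lia. apply Na; auto. }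
  split; auto. intro Hc.
  apply (orbit_period_iff (transposed_injective HT HF) b Hp) in Hc as [[|i] [Hi Hbi]].
  - pose proof HT as [[Hab _] _]. auto.
  - rewrite E in Hbi by auto. apply (Hmin (S i)); [lia|auto].
Qed.

End Split.

Lemma transposed_split t a b F G : injective_map F -> transposed t a b F G ->
  orbit F a b -> ~ orbit G a b /\ (periodic G a \/ periodic G b).
Proof.
  intros HF HT. revert a b HT.
  assert (Hdir : forall a b m n, transposed t a b F G -> n <= m ->
            Nat.iter m F a = Nat.iter n F b -> periodic G a /\ ~ orbit G a b).
  { intros a b m n HT Hle E. pose proof HT as [[Hab _] _]. apply iter_sub_eq in E; auto.
    destruct (least_witness (fun k => 0 < k /\ Nat.iter k F a = b) (m - n))
      as [k [[Hk1 Hk2] Hk3]].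
    { split; auto. destruct (m - n); simpl in E; [congruence|lia]. }
    destruct (transposed_split_at HF HT Hk1 Hk2) as [Hp Hn].
    - intros j Hj E'. specialize (Hk3 j (conj (proj1 Hj) E')). lia.
    - split; auto. exists k; auto. }
  intros a b HT [m [n E]]. destruct (le_lt_dec n m) as [Hle|Hlt].
  - destruct (Hdir a b m n HT Hle E). auto.
  - destruct (Hdir b a n m (transposed_swap HT)) as [Hp Hn]; [lia|auto|].
    split; [intro; apply Hn, orbit_sym; auto|auto].
Qed.

Lemma touched_periodic t a b F G x : injective_map F -> injective_map G ->
  transposed t a b F G -> periodic F a -> periodic F b -> orbit G a x \/ orbit G b x ->
  periodic G x.
Proof.
  intros HF HG HT Ha Hb Hx. apply (periodic_of_finite_orbit HG).
  destruct (proj2 (finite_orbit_iff HF a) Ha) as [la Hla].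
  destruct (proj2 (finite_orbit_iff HF b) Hb) as [lb Hlb].
  exists (la ++ lb). intros y Hy. apply in_or_app.
  assert (Hy' : orbit G a y \/ orbit G b y)
    by (destruct Hx; [left|right]; eapply orbit_trans; eauto).
  destruct (touched_orbit HT Hy') as [H|H]; [left; apply Hla|right; apply Hlb]; auto.
Qed.

Lemma periodic_untouched t a b F G x : injective_map F -> injective_map G ->
  transposed t a b F G -> ~ (orbit F a x \/ orbit F b x) -> periodic F x -> periodic G x.
Proof.
  intros HF HG HT Hn Hx. apply (periodic_of_finite_orbit HG).
  destruct (proj2 (finite_orbit_iff HF x) Hx) as [l Hl].
  exists l. intros y Hy. apply Hl, (untouched_orbit HT Hn); auto.
Qed.

End Transposition.

Section TransposedOrbit.
Context {Omega : Type}.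
Implicit Types (x y z : Omega).
Variables (t F G : Omega -> Omega) (a b : Omega).
Hypothesis HF : injective_map F.
Hypothesis HO : one_aperiodic_orbit F.
Hypothesis HT : transposed t a b F G.

Let HG : injective_map G := transposed_injective HT HF.

Lemma transposed_merge_aperiodic : ~ orbit F a b -> orbit G a b.
Proof.
  intros Hn.
  destruct (classic (periodic F a)) as [[p Hp]|Ha].
  - apply (transposed_merge HT Hp Hn).
  - destruct (classic (periodic F b)) as [[p Hp]|Hb].
    + apply orbit_sym, (transposed_merge (transposed_swap HT) Hp).
      intro; apply Hn, orbit_sym; auto.
    + exfalso; apply Hn, (proj2 HO); auto.
Qed.

Lemma untouched_aperiodic_orbit y z : ~ periodic G y -> ~ periodic G z ->
  ~ (orbit G a y \/ orbit G b y) -> orbit G y z.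
Proof.
  intros Hy Hz Uy. pose proof (transposed_sym HT) as HT'.
  assert (UFy : ~ (orbit F a y \/ orbit F b y)) by (intro C; apply Uy, (touched_orbit HT' C)).
  assert (NFy : ~ periodic F y) by (intro C; apply Hy, (periodic_untouched HF HG HT UFy C)).
  destruct (classic (orbit G a z \/ orbit G b z)) as [Uz|Uz].
  - exfalso. apply Hz, (touched_periodic HF HG HT); auto;
      apply NNPP; intro C; apply UFy; [left|right]; apply (proj2 HO); auto.
  - assert (UFz : ~ (orbit F a z \/ orbit F b z)) by (intro C; apply Uz, (touched_orbit HT' C)).
    assert (NFz : ~ periodic F z) by (intro C; apply Hz, (periodic_untouched HF HG HT UFz C)).
    apply (untouched_orbit HT UFy), (proj2 HO); auto.
Qed.

Lemma touched_aperiodic_orbit y z : ~ periodic G y -> ~ periodic G z ->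
  orbit G a y \/ orbit G b y -> orbit G a z \/ orbit G b z -> orbit G y z.
Proof.
  intros Hy Hz Uy Uz.
  assert (Hother : forall c d w, periodic G c -> ~ periodic G w ->
            orbit G c w \/ orbit G d w -> orbit G d w).
  { intros c d w Hc Hw [H|H]; auto. exfalso. apply Hw, (periodic_orbit HG Hc H). }
  assert (Hd : forall c, orbit G c y -> orbit G c z -> orbit G y z).
  { intros c Hcy Hcz. apply orbit_trans with c; auto. apply orbit_sym; auto. }
  destruct (classic (orbit G a b)) as [D|D].
  - apply (Hd a); [destruct Uy|destruct Uz]; auto; eapply orbit_trans; eauto.
  - assert (C : orbit F a b) by (apply NNPP; intro C; apply D, transposed_merge_aperiodic; auto).
    destruct (proj2 (transposed_split HF HT C)) as [Pa|Pb].
    + apply (Hd b); apply (Hother a); auto.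
    + apply (Hd a); apply (Hother b); auto; tauto.
Qed.

Lemma one_aperiodic_orbit_transposed : one_aperiodic_orbit G.
Proof.
  split.
  - destruct HO as [[x0 Hx0] _].
    destruct (classic (orbit F a x0 \/ orbit F b x0)) as [U|U].
    + destruct (classic (periodic G a)) as [Pa|Na]; [|eauto].
      destruct (classic (periodic G b)) as [Pb|Nb]; [|eauto].
      exfalso. apply Hx0, (touched_periodic HG HF (transposed_sym HT)); auto.
    + exists x0. intro C. apply Hx0.
      apply (periodic_untouched HG HF (transposed_sym HT)); auto.
      intro C'. apply U, (touched_orbit HT C').
  - intros y z Hy Hz.
    destruct (classic (orbit G a y \/ orbit G b y)) as [Uy|Uy].
    + destruct (classic (orbit G a z \/ orbit G b z)) as [Uz|Uz].
      * apply touched_aperiodic_orbit; auto.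
      * apply orbit_sym, untouched_aperiodic_orbit; auto.
    + apply untouched_aperiodic_orbit; auto.
Qed.

End TransposedOrbit.

Section TouchedCycles.
Context {Omega : Type}.
Implicit Types (F G t : Omega -> Omega) (a b x y : Omega) (S : Omega -> Prop) (xs : list Omega).

Definition period_of F x : nat := epsilon (inhabits 0) (period F x).

Lemma period_of_eq F x p : period F x p -> period_of F x = p.
Proof. intro Hp. apply (period_unique (epsilon_spec _ _ (ex_intro _ p Hp)) Hp). Qed.

Fixpoint periods F xs : list nat :=
  match xs with
  | [] => []
  | x :: xs' => if excluded_middle_informative (periodic F x)
                then period_of F x :: periods F xs' else periods F xs'
  end.

Lemma periods_cons F x xs : periods F (x :: xs) = periods F [x] ++ periods F xs.
Proof. simpl. destruct (excluded_middle_informative _); reflexivity. Qed.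

Lemma length_periods_single F x :
  length (periods F [x]) = if excluded_middle_informative (periodic F x) then 1 else 0.
Proof. simpl. destruct (excluded_middle_informative _); reflexivity. Qed.

Lemma periods_pos F xs p : In p (periods F xs) -> 0 < p.
Proof.
  induction xs as [|x xs IH]; simpl; [tauto|].
  destruct (excluded_middle_informative (periodic F x)) as [Hx|]; auto.
  intros [<-|H]; auto. apply (epsilon_spec _ _ Hx).
Qed.

Lemma count_exact_through F x n : injective_map F ->
  count_exact F (fun S => of_size n S /\ S x) (count_occ Nat.eq_dec (periods F [x]) n).
Proof.
  intros HF.
  assert (Hper : forall S, is_cycle F S -> of_size n S /\ S x -> period F x n).
  { intros S HS [Hs Hx]. apply (period_of_set_card HF).
    apply (set_card_same_set (cycle_orbit x HS Hx) Hs). }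
  simpl. destruct (excluded_middle_informative (periodic F x)) as [Hx|Hx].
  - simpl. destruct (Nat.eq_dec (period_of F x) n) as [E|E].
    + assert (Hp : period F x n) by (rewrite <- E; apply (epsilon_spec _ _ Hx)).
      apply count_exact_1 with (orbit F x); [apply is_cycle_orbit| |].
      * split; [apply set_card_orbit|apply orbit_refl]; auto.
      * intros S HS [_ HSx]. apply cycle_orbit; auto.
    + apply count_exact_0. intros S HS HSn. apply E, period_of_eq, (Hper S HS HSn).
  - apply count_exact_0. intros S HS HSn. apply Hx. exists n. apply (Hper S HS HSn).
Qed.

Lemma count_exact_touching F xs n : injective_map F ->
  ForallOrdPairs (fun x y => ~ orbit F x y) xs ->
  count_exact F (fun S => of_size n S /\ exists x, In x xs /\ S x)
    (count_occ Nat.eq_dec (periods F xs) n).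
Proof.
  intros HF. induction xs as [|x0 xs IH]; intros Hxs.
  - apply count_exact_0. intros S _ [_ [x [[] _]]].
  - inversion Hxs as [|? ? H1 H2]; subst. rewrite Forall_forall in H1.
    rewrite periods_cons, count_occ_app.
    apply count_exact_union with (Q := fun S => S x0); [intros S T E; apply E|..].
    + eapply count_exact_ext; [|exact (count_exact_through x0 n HF)].
      intros S HS. simpl. split; [intros [A B]|intros [[A _] B]]; repeat split; eauto.
    + eapply count_exact_ext; [|exact (IH H2)].
      intros S HS. split.
      * intros [A [x [Hx HSx]]]. split; [split; auto|]; [exists x; simpl; auto|].
        intro HS0. apply (H1 x Hx). apply orbit_sym, (cycle_orbit x HS HSx); auto.
      * intros [[A [x [[->|Hx] HSx]]] B]; [contradiction|]. split; eauto.
Qed.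

Definition touching_reps F a b : list Omega :=
  if excluded_middle_informative (orbit F a b) then [a] else [a; b].

Lemma touching_reps_distinct F a b :
  ForallOrdPairs (fun x y => ~ orbit F x y) (touching_reps F a b).
Proof.
  unfold touching_reps. destruct (excluded_middle_informative _); repeat constructor; auto.
Qed.

Lemma touching_reps_spec F a b S : is_cycle F S ->
  ((S a \/ S b) <-> exists x, In x (touching_reps F a b) /\ S x).
Proof.
  intros HS. unfold touching_reps. destruct (excluded_middle_informative _) as [C|C].
  - split.
    + intros [Ha|Hb]; exists a; split; simpl; auto.
      apply (cycle_orbit b HS Hb). apply orbit_sym; auto.
    + intros [x [[<-|[]] Hx]]; auto.
  - split.
    + intros [Ha|Hb]; [exists a|exists b]; simpl; auto.
    + intros [x [[<-|[<-|[]]] Hx]]; auto.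
Qed.

(* The periods of the finite cycles of [F] through [a] or [b], one entry per cycle. *)
Definition touched_periods F a b : list nat := periods F (touching_reps F a b).

Lemma cycle_count_transposed t a b F G n k : injective_map F -> transposed t a b F G ->
  count_exact F (of_size n) k ->
  count_occ Nat.eq_dec (touched_periods F a b) n <= k /\
  count_exact G (of_size n)
    (k - count_occ Nat.eq_dec (touched_periods F a b) n
       + count_occ Nat.eq_dec (touched_periods G a b) n).
Proof.
  intros HF HT Hk. pose proof (transposed_injective HT HF) as HG.
  assert (HQ : respects_same_set (fun S => S a \/ S b)).
  { intros S T E [X|X]; [left|right]; apply E; auto. }
  assert (Htouch : forall H, injective_map H -> count_exact H (fun S => of_size n S /\ (S a \/ S b))
                                  (count_occ Nat.eq_dec (touched_periods H a b) n)).
  { intros H HH. eapply count_exact_ext;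
      [|exact (count_exact_touching n HH (touching_reps_distinct H a b))].
    intros S HS. rewrite (touching_reps_spec a b HS). tauto. }
  destruct (count_exact_split HQ Hk) as [k1 [k2 [H1 [H2 ->]]]].
  rewrite (count_exact_unique H1 (Htouch F HF)).
  split; [lia|].
  replace (_ + k2 - _ + _) with (count_occ Nat.eq_dec (touched_periods G a b) n + k2) by lia.
  apply (count_exact_union (of_size n) HQ (Htouch G HG)).
  apply count_exact_transfer with F; auto. intros S [_ HS]. split; intro C.
  - apply (untouched_cycle HT); auto; tauto.
  - apply (untouched_cycle (transposed_sym HT)); auto; tauto.
Qed.

End TouchedCycles.

Section TouchedParity.
Context {Omega : Type}.
Implicit Types (F G t : Omega -> Omega) (a b : Omega).

Lemma touched_periods_parity_split t a b F G : injective_map F -> transposed t a b F G ->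
  orbit F a b -> Nat.Odd (length (touched_periods F a b) + length (touched_periods G a b)).
Proof.
  intros HF HT C. pose proof (transposed_injective HT HF) as HG.
  destruct (transposed_split HF HT C) as [D PG].
  unfold touched_periods, touching_reps.
  destruct (excluded_middle_informative (orbit F a b)); [|contradiction].
  destruct (excluded_middle_informative (orbit G a b)); [contradiction|].
  rewrite (periods_cons G a [b]), length_app, !length_periods_single.
  destruct (classic (periodic F a)) as [Pa|Na].
  - assert (Pb : periodic F b) by apply (periodic_orbit HF Pa C).
    assert (PGa : periodic G a)
      by apply (touched_periodic HF HG HT Pa Pb (or_introl (orbit_refl G a))).
    assert (PGb : periodic G b)
      by apply (touched_periodic HF HG HT Pa Pb (or_intror (orbit_refl G b))).
    repeat destruct (excluded_middle_informative _); try contradiction. exists 1; reflexivity.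
  - assert (NG : ~ (periodic G a /\ periodic G b)).
    { intros [PGa PGb]. apply Na.
      apply (touched_periodic HG HF (transposed_sym HT) PGa PGb (or_introl (orbit_refl F a))). }
    repeat destruct (excluded_middle_informative _); try tauto; exists 0; reflexivity.
Qed.

(* Either the orbits through [a] and [b] merge or one of them splits; in both cases the number of
   finite orbits involved changes by an odd amount, since the infinite orbit is involved on both
   sides or on neither. *)
Lemma touched_periods_parity t a b F G : injective_map F -> one_aperiodic_orbit F ->
  transposed t a b F G -> Nat.Odd (length (touched_periods F a b) + length (touched_periods G a b)).
Proof.
  intros HF HO HT. destruct (classic (orbit F a b)) as [C|C].
  - apply (touched_periods_parity_split HF HT C).
  - rewrite Nat.add_comm.
    apply (touched_periods_parity_split (transposed_injective HT HF) (transposed_sym HT)).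
    apply (transposed_merge_aperiodic HO HT C).
Qed.

End TouchedParity.

(** * Parity of the cycle-count defect *)

Section Sums.
Implicit Types (d e : nat -> Z).

Lemma sum_from1_ext d e N : (forall n, 1 <= n <= N -> d n = e n) -> sum_from1 d N = sum_from1 e N.
Proof. induction N; intros H; simpl; auto. rewrite IHN, H; auto; [lia|intros; apply H; lia]. Qed.

Lemma sum_from1_add d e N :
  sum_from1 (fun n => (d n + e n)%Z) N = (sum_from1 d N + sum_from1 e N)%Z.
Proof. induction N; simpl; auto. rewrite IHN; lia. Qed.

Lemma sum_from1_opp d N : sum_from1 (fun n => (- d n)%Z) N = (- sum_from1 d N)%Z.
Proof. induction N; simpl; auto. rewrite IHN; lia. Qed.

Lemma sum_from1_stable d N M : N <= M -> (forall n, N < n <= M -> d n = 0%Z) ->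
  sum_from1 d M = sum_from1 d N.
Proof.
  intros Hle H. induction M as [|M IH]; [replace N with 0 by lia; auto|].
  destruct (Nat.eq_dec N (S M)) as [->|Hne]; auto.
  simpl. rewrite IH, H; try lia. intros; apply H; lia.
Qed.

Lemma sum_from1_count_occ (l : list nat) N : (forall p, In p l -> 1 <= p <= N) ->
  sum_from1 (fun n => Z.of_nat (count_occ Nat.eq_dec l n)) N = Z.of_nat (length l).
Proof.
  induction l as [|x l IH]; intros H; simpl.
  - clear H. induction N as [|N IHN]; simpl; auto. rewrite IHN; reflexivity.
  - rewrite (sum_from1_ext _ (fun n => ((if Nat.eq_dec x n then 1 else 0)
                                         + Z.of_nat (count_occ Nat.eq_dec l n))%Z)).
    + rewrite sum_from1_add, IH by (intros; apply H; right; auto).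
      assert (Hx : 1 <= x <= N) by (apply H; left; auto). clear -Hx.
      enough (sum_from1 (fun n => if Nat.eq_dec x n then 1%Z else 0%Z) N = 1%Z) by lia.
      induction N as [|N IHN]; [lia|]. simpl. destruct (Nat.eq_dec x (S N)) as [->|E].
      * rewrite (sum_from1_stable _ (N := 0)); [simpl; lia|lia|].
        intros n Hn. destruct (Nat.eq_dec (S N) n); [lia|auto].
      * rewrite IHN; lia.
    + intros n _. destruct (Nat.eq_dec x n); lia.
Qed.

End Sums.

Section Defect.
Context {Omega : Type}.
Implicit Types (F G H : Omega -> Omega).

Definition count_defect F G N : Z :=
  sum_from1 (fun n => (Z.of_nat (cycle_count F n) - Z.of_nat (cycle_count G n))%Z) N.

Definition agree_beyond F G N := forall n, N < n -> cycle_count F n = cycle_count G n.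

(* The eventually constant sum of [(F)C_n - (G)C_n] is congruent to [c] modulo 2. *)
Definition defect_parity F G (c : Z) :=
  exists N, agree_beyond F G N /\ Z.Even (count_defect F G N + c).

Lemma count_defect_stable F G N M : agree_beyond F G N -> N <= M ->
  count_defect F G M = count_defect F G N.
Proof.
  intros HN Hle. apply sum_from1_stable; auto. intros n Hn. rewrite HN; lia.
Qed.

Lemma defect_parity_large F G c : defect_parity F G c ->
  exists N, forall M, N <= M -> agree_beyond F G M /\ Z.Even (count_defect F G M + c).
Proof.
  intros [N [HN He]]. exists N. intros M HM. split.
  - intros n Hn. apply HN; lia.
  - rewrite (count_defect_stable HN HM); auto.
Qed.

Lemma defect_parity_trans F G H c d :
  defect_parity F G c -> defect_parity G H d -> defect_parity F H (c + d).
Proof.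
  intros HFG HGH. destruct (defect_parity_large HFG) as [N1 H1].
  destruct (defect_parity_large HGH) as [N2 H2]. set (M := Nat.max N1 N2).
  destruct (H1 M) as [A1 [z1 E1]]; [lia|]. destruct (H2 M) as [A2 [z2 E2]]; [lia|].
  exists M. split.
  - intros n Hn. rewrite A1, A2; auto.
  - exists (z1 + z2)%Z. unfold count_defect in *.
    rewrite <- (sum_from1_ext (fun n => ((Z.of_nat (cycle_count F n) - Z.of_nat (cycle_count G n))
                  + (Z.of_nat (cycle_count G n) - Z.of_nat (cycle_count H n)))%Z))
      by (intros; lia).
    rewrite sum_from1_add. lia.
Qed.

Lemma defect_parity_sym F G c : defect_parity F G c -> defect_parity G F c.
Proof.
  intros [N [HN [z E]]]. exists N. split.
  - intros n Hn. symmetry; auto.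
  - exists (c - z)%Z. unfold count_defect in *.
    rewrite (sum_from1_ext _ (fun n =>
               (- (Z.of_nat (cycle_count F n) - Z.of_nat (cycle_count G n)))%Z))
      by (intros; lia).
    rewrite sum_from1_opp. lia.
Qed.

Lemma defect_parity_unique F G c d : defect_parity F G c -> defect_parity F G d -> Z.Even (c + d).
Proof.
  intros Hc Hd. destruct (defect_parity_large Hc) as [N1 H1].
  destruct (defect_parity_large Hd) as [N2 H2].
  destruct (H1 (Nat.max N1 N2)) as [_ [z1 E1]]; [lia|].
  destruct (H2 (Nat.max N1 N2)) as [_ [z2 E2]]; [lia|].
  exists (z1 + z2 - count_defect F G (Nat.max N1 N2))%Z. lia.
Qed.

Lemma defect_parity_shift F G c d : defect_parity F G c -> Z.Even (c + d) -> defect_parity F G d.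
Proof.
  intros [N [HN [z E]]] [w Ew]. exists N. split; auto. exists (z + w - c)%Z. lia.
Qed.

Lemma defect_parity_of_counts F G : (forall n, 1 <= n -> cycle_count F n = cycle_count G n) ->
  defect_parity F G 0.
Proof.
  intros H. exists 0. split; [intros n Hn; apply H; lia|]. exists 0%Z. reflexivity.
Qed.

End Defect.

Section Products.
Context {Omega : Type}.
Implicit Types (F G t phi psi : Omega -> Omega) (a b x : Omega) (ts : list (Omega -> Omega)).

Lemma compose_lr_app ts1 ts2 x : compose_lr (ts1 ++ ts2) x = compose_lr ts2 (compose_lr ts1 x).
Proof. revert x; induction ts1; intros; simpl; auto. Qed.

Lemma transposition_involutive t x : is_transposition t -> t (t x) = x.
Proof. intros [a [b Ht]]. apply (swaps_involutive Ht). Qed.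

Lemma compose_lr_rev ts x : (forall t, In t ts -> is_transposition t) ->
  compose_lr (rev ts) (compose_lr ts x) = x.
Proof.
  revert x; induction ts as [|t ts IH]; intros x H; simpl; auto.
  rewrite compose_lr_app. simpl. rewrite IH; [|intros; apply H; right; auto].
  apply transposition_involutive, H; left; auto.
Qed.

Lemma compose_lr_conj ts phi psi z : (forall x, psi (phi x) = x) ->
  compose_lr (map (fun t y => phi (t (psi y))) ts) (phi z) = phi (compose_lr ts z).
Proof. intros H. revert z; induction ts; intros; simpl; auto. rewrite H, IHts; auto. Qed.

Lemma is_transposition_conj t phi psi :
  (forall x, psi (phi x) = x) -> (forall y, phi (psi y) = y) ->
  is_transposition t -> is_transposition (fun y => phi (t (psi y))).
Proof.
  intros H1 H2 [a [b [Hab [Hta [Htb Hto]]]]]. exists (phi a), (phi b).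
  split; [|split; [|split]].
  - intro E. apply Hab. rewrite <- (H1 a), E, H1; auto.
  - rewrite H1, Hta; auto.
  - rewrite H1, Htb; auto.
  - intros x Ha Hb. rewrite Hto; auto.
    + intro E; apply Ha; rewrite <- E, H2; auto.
    + intro E; apply Hb; rewrite <- E, H2; auto.
Qed.

Definition swap a b x : Omega :=
  if excluded_middle_informative (x = a) then b
  else if excluded_middle_informative (x = b) then a else x.

Lemma swap_swaps a b : a <> b -> swaps (swap a b) a b.
Proof.
  intros Hab. unfold swap. split; [auto|split; [|split]].
  - destruct (excluded_middle_informative (a = a)); tauto.
  - destruct (excluded_middle_informative (b = a)); [subst; tauto|].
    destruct (excluded_middle_informative (b = b)); tauto.
  - intros x Ha Hb.
    destruct (excluded_middle_informative (x = a)); [tauto|].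
    destruct (excluded_middle_informative (x = b)); tauto.
Qed.

Definition transpositions_after ts F2 F :=
  (forall t, In t ts -> is_transposition t) /\ F = (fun x => compose_lr ts (F2 x)).

Lemma transpositions_after_trans ts1 ts2 F F1 F2 :
  transpositions_after ts1 F1 F -> transpositions_after ts2 F2 F1 ->
  transpositions_after (ts2 ++ ts1) F2 F.
Proof.
  intros [T1 ->] [T2 ->]. split.
  - intros t Ht. apply in_app_or in Ht as [Ht|Ht]; auto.
  - extensionality x. rewrite compose_lr_app; auto.
Qed.

End Products.

Section TranspositionChain.
Context {Omega : Type}.
Implicit Types (F G t : Omega -> Omega) (a b : Omega) (ts : list (Omega -> Omega)).

Lemma admissible_transposed t a b F G : admissible F -> transposed t a b F G -> admissible G.
Proof.
  intros [HF [HO Hc]] HT. split; [apply (transposed_injective HT HF)|split].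
  - apply (one_aperiodic_orbit_transposed HF HO HT).
  - intro n. eexists. apply (cycle_count_transposed HF HT (cycle_count_spec (Hc n))).
Qed.

Lemma defect_parity_transposed t a b F G : admissible F -> transposed t a b F G ->
  defect_parity G F 1.
Proof.
  intros HA HT. pose proof HA as [HF [HO Hc]].
  set (pF := touched_periods F a b). set (pG := touched_periods G a b).
  assert (Hcount : forall n, count_occ Nat.eq_dec pF n <= cycle_count F n /\
            cycle_count G n =
              cycle_count F n - count_occ Nat.eq_dec pF n + count_occ Nat.eq_dec pG n).
  { intro n. destruct (cycle_count_transposed HF HT (cycle_count_spec (Hc n))) as [Hle HG].
    split; auto. apply cycle_count_eq; auto. }
  set (N := list_max (pF ++ pG)).
  assert (Hbound : forall p, In p (pF ++ pG) -> 1 <= p <= N).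
  { intros p Hp. split.
    - apply in_app_or in Hp as [Hp|Hp]; eapply periods_pos; exact Hp.
    - pose proof (proj1 (list_max_le (pF ++ pG) N) (le_n _)) as HM.
      rewrite Forall_forall in HM. apply HM; auto. }
  assert (HpF : forall p, In p pF -> 1 <= p <= N) by (intros; apply Hbound, in_or_app; auto).
  assert (HpG : forall p, In p pG -> 1 <= p <= N) by (intros; apply Hbound, in_or_app; auto).
  exists N. split.
  - intros n Hn. destruct (Hcount n) as [_ ->].
    rewrite (proj1 (count_occ_not_In _ pF n)), (proj1 (count_occ_not_In _ pG n)); [lia| |];
      intro Hin; [specialize (HpG n Hin)|specialize (HpF n Hin)]; lia.
  - unfold count_defect.
    rewrite (sum_from1_ext _ (fun n => (Z.of_nat (count_occ Nat.eq_dec pG n)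
                                      + - Z.of_nat (count_occ Nat.eq_dec pF n))%Z))
      by (intros n _; destruct (Hcount n) as [Hle ->]; lia).
    rewrite sum_from1_add, sum_from1_opp, !sum_from1_count_occ by auto.
    destruct (touched_periods_parity HF HO HT) as [m Hm].
    exists (Z.of_nat (length pG) - Z.of_nat m)%Z. fold pF pG in Hm. lia.
Qed.

Lemma transposition_chain ts F2 F : transpositions_after ts F2 F -> admissible F2 ->
  admissible F /\ (Surjective F <-> Surjective F2) /\ defect_parity F F2 (Z.of_nat (length ts)).
Proof.
  intros [Hts ->]. revert F2 Hts. induction ts as [|t ts IH]; intros F Hts HF.
  - split; [exact HF|split; [tauto|apply defect_parity_of_counts; auto]].
  - destruct (Hts t (or_introl eq_refl)) as [a [b Hs]].
    assert (HT : transposed t a b F (fun x => t (F x))) by (split; [apply Hs|reflexivity]).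
    destruct (IH (fun x => t (F x))) as [A [S D]]; [intros; apply Hts; right; auto|
      apply (admissible_transposed HF HT)|].
    split; [|split]; auto.
    + rewrite S.
      split; [apply (transposed_surjective (transposed_sym HT))|apply (transposed_surjective HT)].
    + apply defect_parity_shift with (Z.of_nat (length ts) + 1)%Z.
      * apply (defect_parity_trans D (defect_parity_transposed HF HT)).
      * exists (Z.of_nat (length ts) + 1)%Z. simpl length. lia.
Qed.

End TranspositionChain.

Lemma approx_even_iff {Omega} (f g : Omega -> Omega) : admissible f -> admissible g ->
  (approx_even f g <-> (Surjective f <-> Surjective g) /\ defect_parity f g 0).
Proof.
  intros Hf Hg. pose proof Hf as [_ [_ Cf]]. pose proof Hg as [_ [_ Cg]].
  assert (Hdiff : forall n d, Cn_diff f g n d ->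
            d = (Z.of_nat (cycle_count f n) - Z.of_nat (cycle_count g n))%Z).
  { intros n d [[C ->]|[j [k [Hj [Hk ->]]]]].
    - rewrite (proj1 (Cn_eq_iff n Hf Hg) C). lia.
    - rewrite (cycle_count_eq Hj), (cycle_count_eq Hk). reflexivity. }
  split.
  - intros [[Ho _] [N [d [HN [Hd He]]]]]. split; [apply (count_eq_open_iff Hf Hg); auto|].
    exists N. split; [intros n Hn; apply Cn_eq_iff; auto|].
    rewrite Z.add_0_r. unfold count_defect.
    rewrite <- (sum_from1_ext d) by (intros n Hn; apply Hdiff, Hd; auto). auto.
  - intros [Hs [N [HN He]]].
    split; [split; [|split; [|split]]|].
    + apply count_eq_open_iff; auto.
    + apply count_eq_forward_iff; auto.
    + exists N. intros n Hn. apply Cn_eq_iff; auto.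
    + intros n _ _. auto.
    + exists N, (fun n => (Z.of_nat (cycle_count f n) - Z.of_nat (cycle_count g n))%Z).
      split; [intros n Hn; apply Cn_eq_iff; auto|split].
      * intros n _. right. exists (cycle_count f n), (cycle_count g n).
        split; [|split]; auto; apply cycle_count_spec; auto.
      * rewrite Z.add_0_r in He. exact He.
Qed.

(** * Conjugacy of maps with equal cycle counts *)

Section Alignment.
Context {Omega : Type}.
Implicit Types (x y z r s w : Omega).
Variables (f g : Omega -> Omega).

Definition aligned r s x y :=
  exists j k, Nat.iter j f x = Nat.iter k f r /\ Nat.iter j g y = Nat.iter k g s.

(* What base points need for [aligned r s] to be a bijection between their orbits: equal
   return times, and backward iterates on both sides or on neither. *)
Definition compatible r s :=
  (forall d, Nat.iter d f r = r <-> Nat.iter d g s = s) /\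
  ((forall z, orbit f r z -> exists w, f w = z) /\ (forall z, orbit g s z -> exists w, g w = z) \/
   (~ exists w, f w = r) /\ (~ exists w, g w = s)).

Lemma aligned_step r s x y : aligned r s x y -> aligned r s (f x) (g y).
Proof. intros [j [k [E1 E2]]]. exists j, (S k). rewrite !Nat.iter_swap, E1, E2. auto. Qed.

Lemma aligned_orbit r s x y : aligned r s x y -> orbit f r x /\ orbit g s y.
Proof. intros [j [k [E1 E2]]]. split; exists k, j; auto. Qed.

Hypothesis Hf : injective_map f.
Hypothesis Hg : injective_map g.

Lemma compatible_iter r s m n : compatible r s ->
  Nat.iter m f r = Nat.iter n f r -> Nat.iter m g s = Nat.iter n g s.
Proof.
  intros [Hc _]. revert m n.
  assert (Hdir : forall m n, n <= m -> Nat.iter m f r = Nat.iter n f r ->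
            Nat.iter m g s = Nat.iter n g s).
  { intros m n Hle E. apply iter_sub_eq in E; auto. apply Hc in E.
    transitivity (Nat.iter n g (Nat.iter (m - n) g s)); [|rewrite E; auto].
    rewrite <- Nat.iter_add. replace (n + (m - n)) with m by lia; auto. }
  intros m n E. destruct (le_lt_dec n m); [apply Hdir; auto|].
  symmetry. apply Hdir; [lia|auto].
Qed.

Lemma aligned_functional r s x y y' : compatible r s ->
  aligned r s x y -> aligned r s x y' -> y = y'.
Proof.
  intros Hc [j [k [A1 A2]]] [j' [k' [B1 B2]]].
  assert (Er : Nat.iter (j' + k) f r = Nat.iter (j + k') f r).
  { rewrite !Nat.iter_add, <- A1, <- B1, iter_comm; reflexivity. }
  eapply compatible_iter in Er; [|exact Hc].
  apply (iter_inj Hg (j' + j)).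
  rewrite Nat.iter_add, A2, (Nat.add_comm j' j), Nat.iter_add, B2, <- !Nat.iter_add; auto.
Qed.

Lemma aligned_total r s x : compatible r s -> orbit f r x -> exists y, aligned r s x y.
Proof.
  intros [_ Hpre] [m [n E]].
  destruct (le_lt_dec n m) as [Hle|Hlt].
  - exists (Nat.iter (m - n) g s), n, m. split; [symmetry; auto|].
    rewrite <- Nat.iter_add. replace (n + (m - n)) with m by lia; auto.
  - assert (Er : Nat.iter (n - m) f x = r) by (apply (iter_sub_eq Hf); [lia|symmetry; auto]).
    destruct Hpre as [[_ Hs]|[Hr _]].
    + assert (Hdeep : forall d, exists y, Nat.iter d g y = s).
      { induction d as [|d [y Hy]]; [exists s; auto|].
        destruct (Hs y) as [w Hw]; [exists 0, d; auto|].
        exists w. rewrite Nat.iter_succ_r, Hw; auto. }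
      destruct (Hdeep (n - m)) as [y Hy]. exists y, n, m. split; [symmetry; auto|].
      rewrite <- Hy, <- Nat.iter_add. replace (m + (n - m)) with n by lia; auto.
    + exfalso. apply Hr. exists (Nat.iter (n - m - 1) f x). rewrite <- Er, <- Nat.iter_succ.
      replace (S (n - m - 1)) with (n - m) by lia; auto.
Qed.

End Alignment.

Lemma aligned_sym {Omega} (f g : Omega -> Omega) r s x y :
  aligned f g r s x y -> aligned g f s r y x.
Proof. intros [j [k [E1 E2]]]. exists j, k; auto. Qed.

Section BasePoints.
Context {Omega : Type}.
Implicit Types (f : Omega -> Omega) (x r : Omega) (B : list Omega).

Definition base_points f n B :=
  (forall r, In r B -> period f r n) /\ ForallOrdPairs (fun r s => ~ orbit f r s) B /\
  (forall x, period f x n -> exists r, In r B /\ orbit f r x).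

Lemma base_points_of_count f n k (d : Omega) : injective_map f ->
  count_exact f (of_size n) k -> exists B, length B = k /\ base_points f n B.
Proof.
  intros Hf [L [A [HL [C D]]]].
  set (rep := fun S : Omega -> Prop => epsilon (inhabits d) S).
  assert (Hrep : forall S, In S L -> S (rep S) /\ same_set S (orbit f (rep S))).
  { intros S HS. destruct (HL S HS) as [HSc _]. pose proof HSc as [Hne _].
    assert (Hin : S (rep S)) by (apply epsilon_spec, Hne).
    split; auto. apply cycle_orbit; auto. }
  exists (map rep L). split; [rewrite length_map; auto|split; [|split]].
  - intros r Hr. apply in_map_iff in Hr as [S [<- HS]]. apply (period_of_set_card Hf).
    apply (set_card_same_set (proj2 (Hrep S HS))), (HL S HS).
  - apply ForallOrdPairs_map with (2 := C). intros S T HS HT HST Hor. apply HST.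
    apply same_set_trans with (orbit f (rep S)); [apply Hrep; auto|].
    apply same_set_trans with (orbit f (rep T)); [apply orbit_same_set; auto|].
    apply same_set_sym, Hrep; auto.
  - intros x Hx. destruct (D (orbit f x)) as [T [HT E]].
    + apply is_cycle_orbit.
    + apply set_card_orbit; auto.
    + exists (rep T). split; [apply in_map; auto|].
      apply orbit_sym, (E (rep T)), (proj1 (Hrep T HT)).
Qed.

Lemma base_points_period f n B i (d : Omega) : base_points f n B -> i < length B ->
  period f (nth i B d) n.
Proof. intros [HB _] Hi. apply HB, nth_In; auto. Qed.

Lemma base_points_nth_inj f n B i j (d : Omega) : base_points f n B ->
  i < length B -> j < length B -> orbit f (nth i B d) (nth j B d) -> i = j.
Proof.
  intros [_ [C _]]. revert i j.
  induction C as [|r B Hr HB IH]; intros i j Hi Hj E; simpl in *; [lia|].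
  rewrite Forall_forall in Hr. destruct i as [|i], j as [|j]; auto.
  - exfalso. apply (Hr (nth j B d)); [apply nth_In; lia|auto].
  - exfalso. apply (Hr (nth i B d)); [apply nth_In; lia|apply orbit_sym; auto].
  - f_equal. apply IH; auto; lia.
Qed.

End BasePoints.

Section Matching.
Context {Omega : Type}.
Implicit Types (x y z : Omega).
Variables (f g : Omega -> Omega) (c : nat -> nat) (Bf Bg : nat -> list Omega) (rf rg : Omega).
Hypothesis Hf : injective_map f.
Hypothesis Hg : injective_map g.
Hypothesis HBf : forall n, 0 < n -> length (Bf n) = c n /\ base_points f n (Bf n).
Hypothesis HBg : forall n, 0 < n -> length (Bg n) = c n /\ base_points g n (Bg n).
Hypothesis Hrf : ~ periodic f rf.
Hypothesis Hrg : ~ periodic g rg.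
Hypothesis Hpre :
  (Surjective f /\ Surjective g) \/ ((~ exists w, f w = rf) /\ (~ exists w, g w = rg)).

(* The [i]-th [n]-cycle of [f] is matched with the [i]-th [n]-cycle of [g], and the infinite
   cycles with each other, by aligning points with the chosen base points. *)
Definition matched x y :=
  (exists n i, 0 < n /\ i < c n /\ aligned f g (nth i (Bf n) rf) (nth i (Bg n) rg) x y) \/
  aligned f g rf rg x y.

Lemma compatible_base_points n i : 0 < n -> i < c n ->
  compatible f g (nth i (Bf n) rf) (nth i (Bg n) rg).
Proof.
  intros Hn Hi.
  pose proof (HBf Hn) as [HLf HPf]. pose proof (HBg Hn) as [HLg HPg].
  assert (Pr : period f (nth i (Bf n) rf) n) by (apply base_points_period; auto; lia).
  assert (Ps : period g (nth i (Bg n) rg) n) by (apply base_points_period; auto; lia).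
  split.
  - intro d. rewrite (period_divides d Pr), (period_divides d Ps). tauto.
  - left. split; intros z Hz; apply periodic_preimage; eapply periodic_orbit; eauto;
      eexists; eauto.
Qed.

Lemma compatible_base_infinite : compatible f g rf rg.
Proof.
  split.
  - intro d. rewrite (aperiodic_iter Hrf d), (aperiodic_iter Hrg d). tauto.
  - destruct Hpre as [[A B]|[A B]]; [left|right]; split; auto.
Qed.

Lemma matched_total x : one_aperiodic_orbit f -> exists y, matched x y.
Proof.
  intros Of. destruct (classic (periodic f x)) as [[n Hn]|Hx].
  - assert (Hn0 : 0 < n) by apply Hn.
    destruct (HBf Hn0) as [HL [_ [_ Hcov]]].
    destruct (Hcov x Hn) as [r [Hr Hrx]].
    destruct (In_nth _ _ rf Hr) as [i [Hi <-]]. rewrite HL in Hi.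
    destruct (aligned_total Hf (compatible_base_points Hn0 Hi) Hrx) as [y Hy].
    exists y. left. exists n, i. auto.
  - destruct (aligned_total Hf compatible_base_infinite (proj2 Of rf x Hrf Hx)) as [y Hy].
    exists y. right. auto.
Qed.

Lemma matched_functional x y y' : matched x y -> matched x y' -> y = y'.
Proof.
  assert (Hper : forall n i y, 0 < n -> i < c n ->
            aligned f g (nth i (Bf n) rf) (nth i (Bg n) rg) x y -> period f x n).
  { intros n i y0 Hn Hi Hal. destruct (HBf Hn) as [HL HB].
    apply (period_orbit Hf (x := nth i (Bf n) rf)); [apply base_points_period; auto; lia|].
    apply (aligned_orbit Hal). }
  intros [[n [i [Hn [Hi H]]]]|H] [[n' [i' [Hn' [Hi' H']]]]|H'].
  - pose proof (Hper n i y Hn Hi H) as Pn. pose proof (Hper n' i' y' Hn' Hi' H') as Pn'.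
    pose proof (period_unique Pn Pn'); subst n'.
    assert (i = i') as <-.
    { destruct (HBf Hn) as [HL HB]. apply (base_points_nth_inj rf HB); try lia.
      apply orbit_trans with x; [apply (aligned_orbit H)|apply orbit_sym, (aligned_orbit H')]. }
    apply (aligned_functional Hf Hg (compatible_base_points Hn Hi) H H').
  - exfalso. apply Hrf. apply (periodic_orbit Hf (x := x)); [exists n; eauto|].
    apply orbit_sym, (aligned_orbit H').
  - exfalso. apply Hrf. apply (periodic_orbit Hf (x := x)); [exists n'; eauto|].
    apply orbit_sym, (aligned_orbit H).
  - apply (aligned_functional Hf Hg compatible_base_infinite H H').
Qed.

Lemma matched_step x y : matched x y -> matched (f x) (g y).
Proof.
  intros [[n [i [Hn [Hi H]]]]|H]; [left; exists n, i|right]; auto using aligned_step.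
Qed.

End Matching.

Lemma matched_sym {Omega} (f g : Omega -> Omega) c Bf Bg rf rg x y :
  matched f g c Bf Bg rf rg x y -> matched g f c Bg Bf rg rf y x.
Proof.
  intros [[n [i [Hn [Hi H]]]]|H]; [left; exists n, i|right]; auto using aligned_sym.
Qed.

Lemma conjugate_of_base_points {Omega} (f g : Omega -> Omega) c Bf Bg (rf rg : Omega) :
  injective_map f -> injective_map g -> one_aperiodic_orbit f -> one_aperiodic_orbit g ->
  (forall n, 0 < n -> length (Bf n) = c n /\ base_points f n (Bf n)) ->
  (forall n, 0 < n -> length (Bg n) = c n /\ base_points g n (Bg n)) ->
  ~ periodic f rf -> ~ periodic g rg ->
  (Surjective f /\ Surjective g) \/ ((~ exists w, f w = rf) /\ (~ exists w, g w = rg)) ->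
  exists phi psi, conjugate_by f g phi psi.
Proof.
  intros Hf Hg Of Og HBf HBg Hrf Hrg Hpre.
  assert (Hpre' : (Surjective g /\ Surjective f) \/
                  ((~ exists w, g w = rg) /\ (~ exists w, f w = rf))) by tauto.
  set (M := matched f g c Bf Bg rf rg). set (M' := matched g f c Bg Bf rg rf).
  set (phi := fun x => epsilon (inhabits x) (M x)).
  set (psi := fun y => epsilon (inhabits y) (M' y)).
  assert (Hphi : forall x, M x (phi x)).
  { intro x. apply epsilon_spec, (matched_total c Bf Bg Hf Hg HBf HBg Hrf Hrg Hpre x Of). }
  assert (Hpsi : forall y, M' y (psi y)).
  { intro y. apply epsilon_spec, (matched_total c Bg Bf Hg Hf HBg HBf Hrg Hrf Hpre' y Og). }
  exists phi, psi. split; [|split].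
  - intro x. apply (matched_functional Hg Hf HBg HBf Hrg Hrf Hpre' (Hpsi (phi x))).
    apply matched_sym, Hphi.
  - intro y. apply (matched_functional Hf Hg HBf HBg Hrf Hrg Hpre (Hphi (psi y))).
    apply matched_sym, Hpsi.
  - intro x. apply (matched_functional Hf Hg HBf HBg Hrf Hrg Hpre (Hphi (f x))).
    apply matched_step, Hphi.
Qed.

Theorem conjugate_of_equal_counts {Omega} (f g : Omega -> Omega) :
  admissible f -> admissible g -> (Surjective f <-> Surjective g) ->
  (forall n, 0 < n -> cycle_count f n = cycle_count g n) ->
  exists phi psi, conjugate_by f g phi psi.
Proof.
  intros [Hf [Of Cf]] [Hg [Og Cg]] Hs Hc. pose proof Of as [[x0 _] _].
  set (c := cycle_count f).
  assert (HB : forall h : Omega -> Omega, injective_map h ->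
            (forall n, 0 < n -> count_exact h (of_size n) (c n)) ->
            exists B, forall n, 0 < n -> length (B n) = c n /\ base_points h n (B n)).
  { intros h Hh Hch.
    exists (fun n => epsilon (inhabits []) (fun B => length B = c n /\ base_points h n B)).
    intros n Hn. apply epsilon_spec, (base_points_of_count x0 Hh (Hch n Hn)). }
  destruct (HB f Hf) as [Bf HBf]; [intros; apply cycle_count_spec; auto|].
  destruct (HB g Hg) as [Bg HBg];
    [intros; unfold c; rewrite Hc; auto; apply cycle_count_spec; auto|].
  destruct (classic (Surjective f)) as [S|S].
  - pose proof Of as [[rf Hrf] _]. pose proof Og as [[rg Hrg] _].
    apply conjugate_of_base_points with c Bf Bg rf rg; auto. tauto.
  - destruct (not_surjective_aperiodic S) as [rf [Hrf Nf]].
    destruct (not_surjective_aperiodic (f := g) ltac:(tauto)) as [rg [Hrg Ng]].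
    apply conjugate_of_base_points with c Bf Bg rf rg; auto.
Qed.

(** * Absorbing finite cycles into the infinite cycle *)

Section Absorption.
Context {Omega : Type}.
Implicit Types (F G : Omega -> Omega).

Lemma periodic_of_cycle_count F n : admissible F -> 0 < cycle_count F n -> exists a, period F a n.
Proof.
  intros [HF [_ Hc]] Hn.
  destruct (cycle_count_spec (Hc n)) as [[|S L] [A [B _]]]; [simpl in A; lia|].
  destruct (B S (or_introl eq_refl)) as [HS Hsz]. pose proof HS as [[a Ha] _].
  exists a. apply (period_of_set_card HF), (set_card_same_set (cycle_orbit a HS Ha) Hsz).
Qed.

(* Transposing a point of an [n]-cycle with a point of the infinite cycle merges the two. *)
Lemma absorb_cycle F n : admissible F -> 0 < cycle_count F n ->
  exists t G, transpositions_after [t] G F /\ admissible G /\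
    cycle_count G n = cycle_count F n - 1 /\
    (forall m, m <> n -> cycle_count G m = cycle_count F m).
Proof.
  intros HA Hn. pose proof HA as [HF [HO Hc]].
  destruct (periodic_of_cycle_count n HA Hn) as [a Ha]. pose proof HO as [[b Hb] _].
  assert (Hab : a <> b) by (intro E; apply Hb; exists n; subst; auto).
  set (t := swap a b). set (G := fun x => t (F x)).
  assert (HT : transposed t a b F G) by (split; [apply swap_swaps|]; auto).
  pose proof (admissible_transposed HA HT) as HAG. pose proof HAG as [HG _].
  assert (Nab : ~ orbit F a b) by (intro C; apply Hb, (periodic_orbit HF (ex_intro _ n Ha) C)).
  assert (EF : touched_periods F a b = [n]).
  { unfold touched_periods, touching_reps. simpl.
    destruct (excluded_middle_informative (orbit F a b)); [contradiction|]. simpl.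
    destruct (excluded_middle_informative (periodic F a)) as [_|Na];
      [|exfalso; apply Na; exists n; auto].
    destruct (excluded_middle_informative (periodic F b)); [contradiction|].
    rewrite (period_of_eq Ha); auto. }
  assert (EG : touched_periods G a b = []).
  { unfold touched_periods, touching_reps. simpl.
    destruct (excluded_middle_informative (orbit G a b)) as [_|C];
      [|exfalso; apply C, (transposed_merge HT Ha Nab)].
    simpl. destruct (excluded_middle_informative (periodic G a)) as [Pa|]; auto. exfalso.
    pose proof (periodic_orbit HG Pa (transposed_merge HT Ha Nab)) as Pb.
    apply Hb, (touched_periodic HG HF (transposed_sym HT) Pa Pb). right; apply orbit_refl. }
  exists t, G. split; [|split; [auto|]].
  - split; [intros t' [<-|[]]; exists a, b; apply swap_swaps; auto|].
    extensionality x. simpl. destruct (transposed_sym HT) as [_ ->]. auto.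
  - assert (Hcount : forall m, cycle_count G m = cycle_count F m - count_occ Nat.eq_dec [n] m).
    { intro m. destruct (cycle_count_transposed HF HT (cycle_count_spec (Hc m))) as [_ H].
      rewrite EF, EG in H. rewrite (cycle_count_eq H). simpl. lia. }
    split; intros; rewrite Hcount; simpl; destruct (Nat.eq_dec n _); try lia.
Qed.

Lemma absorb_cycles_of_size F n : admissible F ->
  exists ts F2, transpositions_after ts F2 F /\ admissible F2 /\ cycle_count F2 n = 0 /\
    (forall m, m <> n -> cycle_count F2 m = cycle_count F m).
Proof.
  remember (cycle_count F n) as k eqn:Hk. revert F Hk.
  induction k as [|k IH]; intros F Hk HA.
  - exists [], F. split; [split; [intros t []|reflexivity]|auto].
  - destruct (absorb_cycle n HA ltac:(lia)) as [t [G [HtG [HAG [Hn Hm]]]]].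
    destruct (IH G ltac:(lia) HAG) as [ts [F2 [HF2 [HA2 [Hn2 Hm2]]]]].
    exists (ts ++ [t]), F2. split; [apply (transpositions_after_trans HtG HF2)|].
    split; auto. split; auto. intros m Hmn. rewrite Hm2, Hm; auto.
Qed.

Lemma absorb_finite_cycles F N : admissible F ->
  exists ts F2, transpositions_after ts F2 F /\ admissible F2 /\
    (forall n, n <= N -> cycle_count F2 n = 0) /\
    (forall n, N < n -> cycle_count F2 n = cycle_count F n).
Proof.
  intros HA. induction N as [|N IH].
  - exists [], F. split; [split; [intros t []|reflexivity]|split; auto].
    split; auto. intros n Hn. replace n with 0 by lia. apply cycle_count_eq, count_exact_size0.
  - destruct IH as [ts1 [F1 [H1 [HA1 [Z1 E1]]]]].
    destruct (absorb_cycles_of_size (S N) HA1) as [ts2 [F2 [H2 [HA2 [Z2 E2]]]]].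
    exists (ts2 ++ ts1), F2. split; [apply (transpositions_after_trans H1 H2)|split; auto].
    split; intros n Hn.
    + destruct (Nat.eq_dec n (S N)) as [->|Hne]; auto. rewrite E2, Z1; auto; lia.
    + rewrite E2, E1; lia.
Qed.

End Absorption.

Section MainDirections.
Context {Omega : Type}.
Implicit Types (f g h hinv phi psi : Omega -> Omega) (ts : list (Omega -> Omega)).

Lemma conjugate_factorization f g (f2 g2 : Omega -> Omega) tsf tsg phi psi :
  transpositions_after tsf f2 f -> transpositions_after tsg g2 g -> conjugate_by f2 g2 phi psi ->
  Nat.Even (length tsf + length tsg) ->
  exists h hinv h1 h2, is_sym h hinv /\ is_alt h1 /\ is_alt h2 /\
    forall x, f x = hinv (h2 (g (h1 (h x)))).
Proof.
  intros [Tf ->] [Tg ->] [P1 [P2 P3]] [k Hk].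
  set (M := map (fun t y => phi (t (psi y))) tsf).
  exists phi, psi, (fun x => x), (compose_lr (rev tsg ++ M)).
  split; [split; auto|split; [|split]].
  - exists []. split; [exists 0; auto|split; [intros t []|auto]].
  - exists (rev tsg ++ M). split; [|split; [|auto]].
    + exists k. unfold M. rewrite length_app, length_rev, length_map. lia.
    + intros t Ht. apply in_app_or in Ht as [Ht|Ht]; [apply Tg, in_rev; auto|].
      apply in_map_iff in Ht as [t0 [<- Ht0]]. apply is_transposition_conj; auto.
  - intro x. rewrite compose_lr_app, compose_lr_rev by auto.
    unfold M. rewrite <- P3, compose_lr_conj, P1 by auto. reflexivity.
Qed.

Lemma conjugate_by_alt f g h hinv (h1 h2 : Omega -> Omega) ts1 ts2 : is_sym h hinv ->
  (forall t, In t ts1 -> is_transposition t) -> (forall x, h1 x = compose_lr ts1 x) ->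
  (forall x, h2 x = compose_lr ts2 x) -> (forall x, f x = hinv (h2 (g (h1 (h x))))) ->
  conjugate_by f (fun y => compose_lr (ts2 ++ ts1) (g y))
    (fun x => h1 (h x)) (fun y => hinv (compose_lr (rev ts1) y)).
Proof.
  intros [Hs1 Hs2] T1 Q1 Q2 Heq. split; [|split].
  - intro x. rewrite Q1, compose_lr_rev; auto.
  - intro y. rewrite Hs2, Q1, <- (rev_involutive ts1) at 1. apply compose_lr_rev.
    intros t Ht. apply T1, in_rev; auto.
  - intro x. rewrite Heq, Hs2, Q1, Q2, compose_lr_app. reflexivity.
Qed.

Lemma approx_even_conjugate f g : admissible f -> admissible g -> approx_even f g ->
  exists h hinv h1 h2, is_sym h hinv /\ is_alt h1 /\ is_alt h2 /\
    forall x, f x = hinv (h2 (g (h1 (h x)))).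
Proof.
  intros HAf HAg HE. destruct (proj1 (approx_even_iff HAf HAg) HE) as [Hs Hd].
  pose proof Hd as [N [HN _]].
  destruct (absorb_finite_cycles N HAf) as [tsf [f2 [Tf [Af2 [Zf Ef]]]]].
  destruct (absorb_finite_cycles N HAg) as [tsg [g2 [Tg [Ag2 [Zg Eg]]]]].
  destruct (transposition_chain Tf Af2) as [_ [Sf Df]].
  destruct (transposition_chain Tg Ag2) as [_ [Sg Dg]].
  assert (Hc : forall n, 0 < n -> cycle_count f2 n = cycle_count g2 n).
  { intros n Hn. destruct (le_lt_dec n N); [rewrite Zf, Zg|rewrite Ef, Eg, HN]; auto. }
  destruct (conjugate_of_equal_counts Af2 Ag2 ltac:(tauto) Hc) as [phi [psi Hphi]].
  apply (conjugate_factorization Tf Tg Hphi).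
  pose proof (defect_parity_trans Df (defect_parity_trans (defect_parity_of_counts f2 g2 Hc)
                                        (defect_parity_sym Dg))) as D.
  destruct (defect_parity_unique D Hd) as [z Ez]. exists (Z.to_nat z). lia.
Qed.

Lemma conjugate_approx_even f g : admissible f -> admissible g ->
  (exists h hinv h1 h2, is_sym h hinv /\ is_alt h1 /\ is_alt h2 /\
     forall x, f x = hinv (h2 (g (h1 (h x))))) ->
  approx_even f g.
Proof.
  intros HAf HAg [h [hinv [h1 [h2 [Hs [[ts1 [E1 [T1 Q1]]] [[ts2 [E2 [T2 Q2]]] Heq]]]]]]].
  pose proof (conjugate_by_alt f g h1 h2 ts1 ts2 Hs T1 Q1 Q2 Heq) as Hc.
  set (F := fun y => compose_lr (ts2 ++ ts1) (g y)) in Hc.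
  assert (Tts : transpositions_after (ts2 ++ ts1) g F).
  { split; [intros t Ht; apply in_app_or in Ht as [Ht|Ht]; auto|reflexivity]. }
  destruct (transposition_chain Tts HAg) as [AF [SF DF]].
  apply approx_even_iff; auto. split.
  - rewrite <- SF.
    split; [apply (conjugate_surjective Hc)|apply (conjugate_surjective (conjugate_by_sym Hc))].
  - apply defect_parity_shift with (0 + Z.of_nat (length (ts2 ++ ts1)))%Z.
    + apply defect_parity_trans with F; [|exact DF].
      apply defect_parity_of_counts. intros n _. apply (cycle_count_conjugate n Hc AF).
    + destruct E1 as [k1 Hk1], E2 as [k2 Hk2]. exists (Z.of_nat (k1 + k2)).
      rewrite length_app. lia.
Qed.

End MainDirections.

Theorem mainTheorem18 (Omega : Type) (HOmega : countably_infinite Omega)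
  (f g : Omega -> Omega) (Hf : injective_map f) (Hg : injective_map g)
  (Hf1 : one_infinite_cycle f) (Hg1 : one_infinite_cycle g)
  (Hfc : forall n, 1 <= n -> count_finite f (of_size n))
  (Hgc : forall n, 1 <= n -> count_finite g (of_size n)) :
  approx_even f g <->
  exists h hinv h1 h2 : Omega -> Omega,
    is_sym h hinv /\ is_alt h1 /\ is_alt h2 /\
    (* f = h h1 g h2 h^{-1}, maps acting on the right *)
    forall x, f x = hinv (h2 (g (h1 (h x)))).
Proof.
  pose proof (admissible_intro Hf Hf1 Hfc) as HAf.
  pose proof (admissible_intro Hg Hg1 Hgc) as HAg.
  split; [apply approx_even_conjugate|apply conjugate_approx_even]; auto.
Qed.
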